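(* For every $\epsilon>0$ and every integer $d\ge 2$ there exist $\mathbf{w}_1,\dots,\mathbf{w}_n\in\mathbb{S}^{d-1}$ and $v_1,\dots,v_n\in\mathbb{R}$ with $|v_i|\le 1/n$, where $n=\lceil 36/\epsilon^2\rceil$, such that the network $N(\mathbf{x})=\sum_{i=1}^{n}v_i\exp(\mathbf{w}_i^\top\mathbf{x})$ satisfies $$\sup_{\mathbf{x}\in B_d}\big|N(\mathbf{x})-F_d(\|\mathbf{x}\|)\big|\le\epsilon .$$
   Context: $\|\cdot\|$ is the Euclidean norm, $B_d$ the closed unit ball and $\mathbb{S}^{d-1}$ the unit sphere in $\mathbb{R}^d$. For an integer $k\ge0$, $k!!=\prod_{i=0}^{\lceil k/2\rceil-1}(k-2i)$ (so $0!!=1$). For $z\in[0,1]$, $F_d(z)=\sum_{k=0}^{\infty}\frac{(d-2)!!}{(2k)!!\,(d+2k-2)!!}z^{2k}$. *)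

From Stdlib Require Import Reals Lra Lia List ClassicalEpsilon.
Open Scope R_scope.

Definition rsum (n : nat) (f : nat -> R) : R :=
  fold_right Rplus 0 (map f (seq 0 n)).

(* vectors of R^d are represented as functions nat -> R; only coordinates 0..d-1 matter *)
Definition dot (d : nat) (x y : nat -> R) : R := rsum d (fun i => x i * y i).
Definition norm (d : nat) (x : nat -> R) : R := sqrt (dot d x x).

Fixpoint dfact (k : nat) : nat :=
  match k with
  | O => 1%nat
  | S O => 1%nat
  | S (S m as k') => (k * dfact m)%nat
  end.

Definition Fterm (d : nat) (z : R) (k : nat) : R :=
  INR (dfact (d - 2)) / (INR (dfact (2 * k)) * INR (dfact (d + 2 * k - 2))) * z ^ (2 * k).

(* F_d(z) = sum_{k>=0} Fterm d z k  (the series converges) *)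
Definition F (d : nat) (z : R) : R :=
  epsilon (inhabits 0) (fun l => infinite_sum (Fterm d z) l).

Definition net (d n : nat) (w : nat -> nat -> R) (v : nat -> R) (x : nat -> R) : R :=
  rsum n (fun i => v i * exp (dot d (w i) x)).

From Stdlib Require Import Reals Lra Lia List ClassicalEpsilon Factorial.
Open Scope R_scope.

(* Let σ be the uniform probability on S^{d-1}.  Its even moments are
   E_σ[(w·x)^{2k}] = m_d(k) ‖x‖^{2k} with m_d(k) = (2k)! / (4^k k! (d/2)_k), and
   the k-th term of F_d(‖x‖) equals m_d(k)/(2k)! ‖x‖^{2k}; hence F_d(‖x‖) = E_σ[exp(w·x)],
   and the theorem is Maurey's sampling lemma for this expectation.  No sphere measure is
   available, so σ is replaced by finitely supported probability rules on the sphere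
   ("cubature rules") whose even moments match m_d(k)‖x‖^{2k} up to any degree and accuracy. *)

Fixpoint fsum (f : nat -> R) (n : nat) : R :=
  match n with O => 0 | S n' => fsum f n' + f n' end.

Lemma fsum_S f n : fsum f (S n) = fsum f n + f n.
Proof. reflexivity. Qed.

Lemma fsum_ext f g n : (forall i, (i < n)%nat -> f i = g i) -> fsum f n = fsum g n.
Proof.
  induction n as [|n IH]; simpl; intros H; auto.
  rewrite IH by (intros; apply H; lia). rewrite H by lia. reflexivity.
Qed.

Lemma fsum_add f g n : fsum (fun i => f i + g i) n = fsum f n + fsum g n.
Proof. induction n; simpl; lra. Qed.

Lemma fsum_sub f g n : fsum (fun i => f i - g i) n = fsum f n - fsum g n.
Proof. induction n; simpl; lra. Qed.

Lemma fsum_scal c f n : fsum (fun i => c * f i) n = c * fsum f n.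
Proof. induction n; simpl; lra. Qed.

Lemma fsum_const c n : fsum (fun _ => c) n = INR n * c.
Proof. induction n; simpl fsum; [simpl; lra | rewrite S_INR; lra]. Qed.

Lemma fsum_le f g n : (forall i, (i < n)%nat -> f i <= g i) -> fsum f n <= fsum g n.
Proof.
  induction n as [|n IH]; simpl; intros H; [lra|].
  assert (f n <= g n) by (apply H; lia).
  assert (fsum f n <= fsum g n) by (apply IH; intros; apply H; lia).
  lra.
Qed.

Lemma fsum_nonneg f n : (forall i, (i < n)%nat -> 0 <= f i) -> 0 <= fsum f n.
Proof.
  intros H. replace 0 with (fsum (fun _ => 0) n) by (rewrite fsum_const; ring).
  apply fsum_le; auto.
Qed.

Lemma fsum_abs f n : Rabs (fsum f n) <= fsum (fun i => Rabs (f i)) n.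
Proof.
  induction n; simpl; [rewrite Rabs_R0; lra|].
  eapply Rle_trans; [apply Rabs_triang | lra].
Qed.

Lemma fsum_shift f n : fsum f (S n) = f 0%nat + fsum (fun i => f (S i)) n.
Proof. induction n; simpl in *; lra. Qed.

Lemma fsum_split f m n : fsum f (m + n) = fsum f m + fsum (fun i => f (m + i)%nat) n.
Proof.
  induction n; simpl; [rewrite Nat.add_0_r; lra|].
  rewrite Nat.add_succ_r; simpl; lra.
Qed.

Lemma fsum_telescope f n : fsum (fun i => f (S i) - f i) n = f n - f 0%nat.
Proof. induction n; simpl; lra. Qed.

Lemma fsum_swap f m n :
  fsum (fun i => fsum (fun j => f i j) n) m = fsum (fun j => fsum (fun i => f i j) m) n.
Proof.
  induction m; simpl.
  - rewrite fsum_const; ring.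
  - rewrite IHm, <- fsum_add; reflexivity.
Qed.

Lemma fsum_even_odd g k :
  fsum g (2 * k + 1) = fsum (fun a => g (2 * a)%nat) (k + 1) + fsum (fun a => g (2 * a + 1)%nat) k.
Proof.
  induction k as [|k IH]; [simpl; lra|].
  replace (2 * S k + 1)%nat with (S (S (2 * k + 1))) by lia.
  replace (S k + 1)%nat with (S (k + 1)) by lia.
  rewrite !fsum_S, IH.
  replace (S (2 * k + 1)) with (2 * (k + 1))%nat by lia. lra.
Qed.

Lemma fsum_single f n k :
  (k < n)%nat -> (forall j, (j < n)%nat -> j <> k -> f j = 0) -> fsum f n = f k.
Proof.
  induction n as [|n IH]; intros Hk H; [lia|]. rewrite fsum_S.
  destruct (Nat.eq_dec k n) as [->|Hne].
  - rewrite (fsum_ext _ (fun _ => 0)) by (intros; apply H; lia).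
    rewrite fsum_const; ring.
  - rewrite IH, (H n) by (try lia; intros; apply H; lia). ring.
Qed.

Lemma sum_f_R0_fsum f n : sum_f_R0 f n = fsum f (S n).
Proof. induction n; simpl in *; lra. Qed.

Definition lsum {A} (L : list A) (f : A -> R) : R := fold_right (fun a acc => f a + acc) 0 L.

Lemma lsum_cons {A} (a : A) L f : lsum (a :: L) f = f a + lsum L f.
Proof. reflexivity. Qed.

Lemma lsum_app {A} (L1 L2 : list A) f : lsum (L1 ++ L2) f = lsum L1 f + lsum L2 f.
Proof. induction L1; simpl; lra. Qed.

Lemma lsum_map {A B} (g : A -> B) L f : lsum (map g L) f = lsum L (fun a => f (g a)).
Proof. induction L; simpl; lra. Qed.

Lemma lsum_flat_map {A B} (g : A -> list B) L f :
  lsum (flat_map g L) f = lsum L (fun a => lsum (g a) f).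
Proof. induction L; simpl; auto. rewrite lsum_app; lra. Qed.

Lemma lsum_ext {A} (L : list A) f g : (forall a, In a L -> f a = g a) -> lsum L f = lsum L g.
Proof. induction L; simpl; intros H; auto. rewrite H, IHL; auto. Qed.

Lemma lsum_add {A} (L : list A) f g : lsum L (fun a => f a + g a) = lsum L f + lsum L g.
Proof. induction L; simpl; lra. Qed.

Lemma lsum_scal {A} (L : list A) c f : lsum L (fun a => c * f a) = c * lsum L f.
Proof. induction L; simpl; lra. Qed.

Lemma lsum_scal_r {A} (L : list A) c f : lsum L (fun a => f a * c) = lsum L f * c.
Proof. induction L; simpl; lra. Qed.

Lemma lsum_zero {A} (L : list A) : lsum L (fun _ => 0) = 0.
Proof. induction L; simpl; lra. Qed.

Lemma lsum_le {A} (L : list A) f g : (forall a, In a L -> f a <= g a) -> lsum L f <= lsum L g.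
Proof.
  induction L; simpl; intros H; [lra|].
  assert (f a <= g a) by auto. assert (lsum L f <= lsum L g) by auto. lra.
Qed.

Lemma lsum_nonneg {A} (L : list A) f : (forall a, In a L -> 0 <= f a) -> 0 <= lsum L f.
Proof. intros H. rewrite <- (lsum_zero L). apply lsum_le; auto. Qed.

Lemma lsum_abs {A} (L : list A) f : Rabs (lsum L f) <= lsum L (fun a => Rabs (f a)).
Proof.
  induction L; simpl; [rewrite Rabs_R0; lra|].
  eapply Rle_trans; [apply Rabs_triang | lra].
Qed.

Lemma lsum_seq s n f : lsum (seq s n) f = fsum (fun i => f (s + i)%nat) n.
Proof.
  revert s; induction n as [|n IH]; intros s; auto.
  change (seq s (S n)) with (s :: seq (S s) n).
  rewrite lsum_cons, IH, fsum_shift, Nat.add_0_r. f_equal.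
  apply fsum_ext; intros; f_equal; lia.
Qed.

Lemma lsum_fsum {A} (L : list A) f n :
  lsum L (fun a => fsum (f a) n) = fsum (fun i => lsum L (fun a => f a i)) n.
Proof.
  induction L; simpl.
  - rewrite fsum_const; ring.
  - rewrite IHL, <- fsum_add; auto.
Qed.

Lemma lsum_swap {A B} (L : list A) (M : list B) f :
  lsum L (fun a => lsum M (fun b => f a b)) = lsum M (fun b => lsum L (fun a => f a b)).
Proof. induction L; simpl; [rewrite lsum_zero; auto | rewrite IHL, <- lsum_add; auto]. Qed.

Lemma fsum_nth (L : list (nat -> R)) f d0 : fsum (fun i => f (nth i L d0)) (length L) = lsum L f.
Proof.
  induction L; [reflexivity|].
  simpl length. rewrite fsum_shift. simpl nth. rewrite lsum_cons, IHL. reflexivity.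
Qed.

Lemma rsum_fsum n f : rsum n f = fsum f n.
Proof.
  unfold rsum. transitivity (lsum (seq 0 n) f).
  - generalize 0%nat; induction n; simpl; intros; auto. rewrite IHn; auto.
  - rewrite lsum_seq; auto.
Qed.

Lemma dot_fsum d x y : dot d x y = fsum (fun i => x i * y i) d.
Proof. apply rsum_fsum. Qed.

Lemma dot_sym d x y : dot d x y = dot d y x.
Proof. rewrite !dot_fsum; apply fsum_ext; intros; ring. Qed.

Lemma dot_nonneg d x : 0 <= dot d x x.
Proof. rewrite dot_fsum; apply fsum_nonneg; intros; nra. Qed.

Lemma quad_discriminant A B C : 0 <= A -> (forall t, 0 <= A * t * t + 2 * B * t + C) -> B * B <= A * C.
Proof.
  intros HA H. destruct (Req_dec A 0) as [->|HA0].
  - destruct (Req_dec B 0) as [->|HB]; [lra|].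
    specialize (H (- (C + 1) / (2 * B))).
    replace (0 * (- (C + 1) / (2 * B)) * (- (C + 1) / (2 * B)) + 2 * B * (- (C + 1) / (2 * B)) + C)
      with (-1) in H by (field; auto). lra.
  - specialize (H (- B / A)).
    replace (A * (- B / A) * (- B / A) + 2 * B * (- B / A) + C) with (C - B * B / A) in H by (field; lra).
    apply Rmult_le_reg_r with (/ A); [apply Rinv_0_lt_compat; lra|].
    replace (A * C * / A) with C by (field; lra). unfold Rdiv in H. lra.
Qed.

Lemma dot_cauchy_schwarz d u x : dot d u x * dot d u x <= dot d u u * dot d x x.
Proof.
  apply quad_discriminant; [apply dot_nonneg|]. intros t.
  replace (dot d u u * t * t + 2 * dot d u x * t + dot d x x)
    with (fsum (fun i => (u i * t + x i) ^ 2) d).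
  - apply fsum_nonneg; intros; apply pow2_ge_0.
  - rewrite !dot_fsum.
    transitivity (fsum (fun i => (t * t) * (u i * u i) + (2 * t) * (u i * x i) + x i * x i) d).
    + apply fsum_ext; intros; ring.
    + rewrite !fsum_add, !fsum_scal. ring.
Qed.

Lemma cv_const c : Un_cv (fun _ => c) c.
Proof. intros e He; exists 0%nat; intros; unfold Rdist; rewrite Rminus_diag, Rabs_R0; lra. Qed.

Lemma cv_scal u l c : Un_cv u l -> Un_cv (fun n => c * u n) (c * l).
Proof. intros H. apply CV_mult; [apply cv_const | exact H]. Qed.

Lemma cv_lsum {A} (L : list A) u l : (forall a, In a L -> Un_cv (u a) (l a)) ->
  Un_cv (fun N => lsum L (fun a => u a N)) (lsum L l).
Proof. induction L; simpl; intros H; [apply cv_const | apply CV_plus; auto]. Qed.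

Lemma cv_dist_le a b la lb c :
  Un_cv a la -> Un_cv b lb -> (forall N, Rabs (a N - b N) <= c) -> Rabs (la - lb) <= c.
Proof.
  intros Ha Hb H. apply (Rle_cv_lim (Un := fun N => Rabs (a N - b N)) (Vn := fun _ => c)); auto.
  - apply cv_cvabs, CV_minus; auto.
  - apply cv_const.
Qed.

Lemma exp_series x : Un_cv (sum_f_R0 (fun k => / INR (fact k) * x ^ k)) (exp x).
Proof. unfold exp. destruct (exist_exp x) as [l Hl]. exact Hl. Qed.

(* ** Finitely supported signed measures and the exponential kernel *)

Definition rule := list (R * (nat -> R)).

Definition integ (L : rule) (g : (nat -> R) -> R) : R := lsum L (fun p => fst p * g (snd p)).

Definition scale (c : R) (L : rule) : rule := map (fun p => (c * fst p, snd p)) L.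

Lemma integ_cons c a L g : integ ((c, a) :: L) g = c * g a + integ L g.
Proof. reflexivity. Qed.

Lemma integ_app L1 L2 g : integ (L1 ++ L2) g = integ L1 g + integ L2 g.
Proof. apply lsum_app. Qed.

Lemma integ_scale c L g : integ (scale c L) g = c * integ L g.
Proof.
  unfold integ, scale. rewrite lsum_map, <- lsum_scal. apply lsum_ext; intros; simpl; ring.
Qed.

Lemma integ_ext L g h : (forall a, g a = h a) -> integ L g = integ L h.
Proof. intros H; apply lsum_ext; intros; rewrite H; auto. Qed.

Lemma integ_ext_in L g h : (forall p, In p L -> g (snd p) = h (snd p)) -> integ L g = integ L h.
Proof. intros H; apply lsum_ext; intros p Hp; rewrite H; auto. Qed.

Lemma integ_scal L c g : integ L (fun a => c * g a) = c * integ L g.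
Proof. unfold integ. rewrite <- lsum_scal. apply lsum_ext; intros; ring. Qed.

Lemma integ_add L g h : integ L (fun a => g a + h a) = integ L g + integ L h.
Proof. unfold integ. rewrite <- lsum_add. apply lsum_ext; intros; ring. Qed.

Lemma integ_const L c : integ L (fun _ => c) = c * lsum L fst.
Proof. unfold integ. rewrite <- lsum_scal. apply lsum_ext; intros; ring. Qed.

Lemma integ_swap L M f :
  integ L (fun a => integ M (fun b => f a b)) = integ M (fun b => integ L (fun a => f a b)).
Proof.
  unfold integ.
  transitivity (lsum L (fun p => lsum M (fun q => fst p * fst q * f (snd p) (snd q)))).
  - apply lsum_ext; intros. rewrite <- lsum_scal. apply lsum_ext; intros; ring.
  - rewrite lsum_swap. apply lsum_ext; intros. rewrite <- lsum_scal. apply lsum_ext; intros; ring.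
Qed.

Section ExpKernel.
Variable d : nat.

Definition kexp (a b : nat -> R) : R := exp (dot d a b).

Definition kform (L M : rule) : R := integ L (fun a => integ M (fun b => kexp a b)).

Lemma kform_sym L M : kform L M = kform M L.
Proof.
  unfold kform. rewrite integ_swap.
  apply integ_ext; intros; apply integ_ext; intros. unfold kexp; rewrite dot_sym; auto.
Qed.

Definition kpow_form (k : nat) (L : rule) : R :=
  lsum L (fun p => lsum L (fun q => fst p * fst q * dot d (snd p) (snd q) ^ k)).

Definition reweight (l : nat) (L : rule) : rule := map (fun p => (fst p * snd p l, snd p)) L.

(* (a·b)^(k+1) = Σ_l a_l b_l (a·b)^k, so the degree k+1 form is a sum of degree k forms. *)
Lemma kpow_form_S k L : kpow_form (S k) L = fsum (fun l => kpow_form k (reweight l L)) d.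
Proof.
  set (t := fun p q l => (fst p * snd p l) * (fst q * snd q l) * dot d (snd p) (snd q) ^ k).
  transitivity (lsum L (fun p => lsum L (fun q => fsum (t p q) d))).
  - apply lsum_ext; intros p _. apply lsum_ext; intros q _. unfold t.
    rewrite (fsum_ext _ (fun l => (fst p * fst q * dot d (snd p) (snd q) ^ k) * (snd p l * snd q l)))
      by (intros; ring).
    rewrite fsum_scal, <- dot_fsum. simpl; ring.
  - rewrite (lsum_ext L _ (fun p => fsum (fun l => lsum L (fun q => t p q l)) d))
      by (intros p _; apply (lsum_fsum L (t p))).
    rewrite (lsum_fsum L (fun p l => lsum L (fun q => t p q l))).
    apply fsum_ext; intros l _. unfold kpow_form, reweight.
    rewrite lsum_map. apply lsum_ext; intros p _. rewrite lsum_map. reflexivity.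
Qed.

Lemma kpow_form_nonneg k : forall L, 0 <= kpow_form k L.
Proof.
  induction k as [|k IH]; intros L.
  - unfold kpow_form. simpl.
    rewrite (lsum_ext L _ (fun p => fst p * lsum L (fun q => fst q))).
    + rewrite lsum_scal_r. apply Rle_0_sqr.
    + intros p _. rewrite <- lsum_scal. apply lsum_ext; intros; ring.
  - rewrite kpow_form_S. apply fsum_nonneg; intros; apply IH.
Qed.

Lemma kform_series L :
  Un_cv (sum_f_R0 (fun k => / INR (fact k) * kpow_form k L)) (kform L L).
Proof.
  unfold kform, integ, kexp.
  eapply Un_cv_ext; cycle 1.
  { apply cv_lsum; intros p _. apply cv_scal, cv_lsum; intros q _. apply cv_scal, exp_series. }
  intros N. simpl. unfold kpow_form. induction N as [|N IH]; cbn [sum_f_R0].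
  - rewrite <- lsum_scal. apply lsum_ext; intros p _.
    rewrite <- !lsum_scal. apply lsum_ext; intros; ring.
  - rewrite <- IH, <- lsum_scal, <- lsum_add. apply lsum_ext; intros p _.
    rewrite <- !lsum_scal, <- lsum_add. apply lsum_ext; intros; ring.
Qed.

Lemma kform_psd L : 0 <= kform L L.
Proof.
  refine (Rle_cv_lim (Un := fun _ => 0) _ (cv_const 0) (kform_series L)). intros N. induction N; cbn [sum_f_R0].
  - apply Rmult_le_pos; [left; apply Rinv_0_lt_compat, INR_fact_lt_0 | apply kpow_form_nonneg].
  - apply Rplus_le_le_0_compat; auto.
    apply Rmult_le_pos; [left; apply Rinv_0_lt_compat, INR_fact_lt_0 | apply kpow_form_nonneg].
Qed.

(* Cauchy-Schwarz in the reproducing kernel space: (∫ exp(x·a) dL)² ≤ exp(x·x) kform L L. *)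
Lemma kform_cauchy_schwarz L x :
  integ L (fun a => kexp x a) * integ L (fun a => kexp x a) <= kexp x x * kform L L.
Proof.
  apply quad_discriminant; [left; apply exp_pos|]. intros t.
  pose proof (kform_psd ((t, x) :: L)) as H. unfold kform in H. rewrite integ_cons in H.
  assert (E : integ L (fun a => integ ((t, x) :: L) (fun b => kexp a b))
              = t * integ L (fun a => kexp x a) + kform L L).
  { unfold kform. rewrite <- integ_scal, <- integ_add. apply integ_ext; intros a.
    rewrite integ_cons. unfold kexp; rewrite dot_sym; auto. }
  rewrite integ_cons, E in H. nra.
Qed.

End ExpKernel.

(* ** Derandomised Maurey sampling *)

Lemma integ_gt_lower L g c :
  (forall p, In p L -> 0 <= fst p) -> (forall p, In p L -> c < g (snd p)) ->
  0 < lsum L fst -> c * lsum L fst < integ L g.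
Proof.
  induction L as [|[w u] L IH]; simpl; intros Hw Hg Hpos; [lra|].
  assert (Hw0 : 0 <= w) by (apply (Hw (w, u)); auto).
  assert (Hgu : c < g u) by (apply (Hg (w, u)); auto).
  assert (Hrest : c * lsum L fst <= integ L g).
  { rewrite <- integ_const. apply lsum_le; intros p Hp.
    apply Rmult_le_compat_l; [apply Hw; auto | left; apply Hg; auto]. }
  assert (0 <= lsum L fst) by (apply lsum_nonneg; intros; apply Hw; auto).
  fold (integ L g). destruct (Req_dec (lsum L fst) 0) as [E|E].
  - rewrite E in *. nra.
  - assert (c * lsum L fst < integ L g) by (apply IH; auto; lra). nra.
Qed.

Lemma exists_below_mean L g c :
  (forall p, In p L -> 0 <= fst p) -> lsum L fst = 1 -> integ L g <= c ->
  exists p, In p L /\ g (snd p) <= c.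
Proof.
  intros Hw Hs Hle. apply NNPP. intros Hnone.
  assert (Hg : forall p, In p L -> c < g (snd p)).
  { intros p Hp. apply Rnot_le_lt. intros Hgp. apply Hnone. exists p; auto. }
  assert (Hlt := integ_gt_lower L g c Hw Hg). rewrite Hs in Hlt. specialize (Hlt Rlt_0_1). lra.
Qed.

Section Sampling.
Variable d : nat.
Variable mu : rule.
Hypothesis mu_nonneg : forall p, In p mu -> 0 <= fst p.
Hypothesis mu_mass : lsum mu fst = 1.
Hypothesis mu_sphere : forall p, In p mu -> dot d (snd p) (snd p) = 1.

Definition atoms (ws : list (nat -> R)) : rule := map (fun w => (1, w)) ws.

Definition residual (ws : list (nat -> R)) : rule := atoms ws ++ scale (- INR (length ws)) mu.
Definition deviation (u : nat -> R) : rule := (1, u) :: scale (-1) mu.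

Lemma integ_atoms ws g : integ (atoms ws) g = lsum ws g.
Proof. unfold integ, atoms. rewrite lsum_map. apply lsum_ext; intros; simpl; ring. Qed.

Lemma integ_residual_cons u ws g :
  integ (residual (u :: ws)) g = integ (residual ws) g + integ (deviation u) g.
Proof.
  unfold residual, deviation. rewrite !integ_app, !integ_cons, !integ_scale.
  simpl length. rewrite S_INR. change (atoms (u :: ws)) with ((1, u) :: atoms ws).
  rewrite integ_cons. ring.
Qed.

Lemma kform_residual_cons u ws :
  kform d (residual (u :: ws)) (residual (u :: ws))
  = kform d (residual ws) (residual ws) + 2 * kform d (residual ws) (deviation u)
    + kform d (deviation u) (deviation u).
Proof.
  assert (Hl : forall Z, kform d (residual (u :: ws)) Z
                         = kform d (residual ws) Z + kform d (deviation u) Z)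
    by (intros Z; apply integ_residual_cons).
  rewrite Hl, (kform_sym d (residual ws)), (kform_sym d (deviation u)), !Hl.
  rewrite (kform_sym d (deviation u) (residual ws)). ring.
Qed.

(* Averaged over u ~ mu, the energy increment is at most exp(1) = exp(u·u). *)
Lemma mean_energy_increment ws :
  integ mu (fun u => 2 * kform d (residual ws) (deviation u) + kform d (deviation u) (deviation u))
  <= exp 1.
Proof.
  set (X := residual ws).
  assert (E1 : forall u, kform d X (deviation u) = integ X (fun a => kexp d a u) - kform d X mu).
  { intros u. unfold kform, deviation.
    rewrite (integ_ext X _ (fun a => kexp d a u + (-1) * integ mu (fun b => kexp d a b)))
      by (intros a; rewrite integ_cons, integ_scale; ring).
    rewrite integ_add, integ_scal. ring. }
  assert (E2 : forall u, kform d (deviation u) (deviation u)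
                         = kexp d u u - 2 * integ mu (fun b => kexp d u b) + kform d mu mu).
  { intros u. unfold kform, deviation. rewrite integ_cons, integ_scale.
    rewrite (integ_ext mu _ (fun a => kexp d a u + (-1) * integ mu (fun b => kexp d a b)))
      by (intros a; rewrite integ_cons, integ_scale; ring).
    rewrite integ_cons, integ_scale, integ_add, integ_scal.
    rewrite (integ_ext mu (fun a => kexp d a u) (fun a => kexp d u a))
      by (intros; unfold kexp; rewrite dot_sym; auto).
    ring. }
  rewrite (integ_ext_in mu _ (fun u => 2 * integ X (fun a => kexp d a u) + (-2) * kform d X mu + exp 1
                                       + (-2) * integ mu (fun b => kexp d u b) + kform d mu mu)).
  2: { intros p Hp. rewrite E1, E2. unfold kexp at 2. rewrite mu_sphere; auto. ring. }
  rewrite !integ_add, !integ_scal, !integ_const, mu_mass.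
  assert (S1 : integ mu (fun u => integ X (fun a => kexp d a u)) = kform d X mu)
    by (unfold kform; rewrite integ_swap; auto).
  rewrite S1. fold (kform d mu mu). pose proof (kform_psd d mu). lra.
Qed.

(* Choosing each new atom below the mean increment keeps the energy at most t·exp(1). *)
Lemma greedy_atoms t :
  exists ws, length ws = t /\ (forall w, In w ws -> exists p, In p mu /\ w = snd p) /\
             kform d (residual ws) (residual ws) <= INR t * exp 1.
Proof.
  induction t as [|t [ws [Hl [Hin HB]]]].
  - exists nil. split; [auto|split; [intros w []|]].
    unfold residual, atoms. simpl. rewrite Ropp_0.
    unfold kform at 1. rewrite integ_scale, Rmult_0_l. lra.
  - destruct (exists_below_mean mu _ (exp 1) mu_nonneg mu_mass (mean_energy_increment ws))
      as [p [Hp Hle]].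
    exists (snd p :: ws). split; [simpl; auto | split].
    + intros w [<-|Hw]; eauto.
    + rewrite kform_residual_cons, S_INR. cbv beta in Hle. lra.
Qed.

Lemma maurey_sampling n :
  exists ws, length ws = n /\ (forall w, In w ws -> exists p, In p mu /\ w = snd p) /\
  forall x, Rabs (lsum ws (fun w => exp (dot d w x)) - INR n * integ mu (fun a => exp (dot d a x)))
            <= sqrt (exp (dot d x x) * (INR n * exp 1)).
Proof.
  destruct (greedy_atoms n) as [ws [Hl [Hin HB]]]. exists ws. repeat split; auto.
  intros x. pose proof (kform_cauchy_schwarz d (residual ws) x) as H.
  assert (E : integ (residual ws) (fun a => kexp d x a)
              = lsum ws (fun w => exp (dot d w x)) - INR n * integ mu (fun a => exp (dot d a x))).
  { unfold residual. rewrite integ_app, integ_atoms, integ_scale, Hl. unfold kexp.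
    rewrite (lsum_ext ws _ (fun w => exp (dot d w x))) by (intros; rewrite dot_sym; auto).
    rewrite (integ_ext mu _ (fun a => exp (dot d a x))) by (intros; rewrite dot_sym; auto). ring. }
  rewrite E in H. rewrite <- sqrt_Rsqr_abs. apply sqrt_le_1_alt. unfold Rsqr.
  eapply Rle_trans; [apply H|]. apply Rmult_le_compat_l; [left; apply exp_pos | auto].
Qed.

End Sampling.

(* ** Binomial coefficients, rising factorials and sphere moments *)

Lemma INR_fact_S n : INR (fact (S n)) = INR (S n) * INR (fact n).
Proof. rewrite fact_simpl. apply mult_INR. Qed.

Lemma Rdiv_nonneg x y : 0 <= x -> 0 < y -> 0 <= x / y.
Proof. intros; unfold Rdiv; apply Rmult_le_pos; auto; left; apply Rinv_0_lt_compat; auto. Qed.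

Lemma Rdiv_le_one x y : 0 < y -> x <= y -> x / y <= 1.
Proof.
  intros. apply Rmult_le_reg_r with y; auto.
  unfold Rdiv; rewrite Rmult_assoc, Rinv_l; lra.
Qed.

Lemma pow_le_one x n : 0 <= x <= 1 -> x ^ n <= 1.
Proof. intros H. rewrite <- (pow1 n). apply pow_incr; lra. Qed.

Fixpoint binom (n k : nat) : R :=
  match n, k with
  | _, O => 1
  | O, S _ => 0
  | S n', S k' => binom n' k' + binom n' (S k')
  end.

Lemma binom_n0 n : binom n 0 = 1.
Proof. destruct n; reflexivity. Qed.

Lemma binom_gt n k : (n < k)%nat -> binom n k = 0.
Proof.
  revert k; induction n; intros k H; destruct k; try lia; simpl; auto.
  rewrite !IHn by lia; lra.
Qed.

Lemma binom_nn n : binom n n = 1.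
Proof. induction n; simpl; auto. rewrite IHn, binom_gt by lia; lra. Qed.

Lemma binom_nonneg n k : 0 <= binom n k.
Proof.
  revert k; induction n; intros k; destruct k; simpl; try lra.
  pose proof (IHn k); pose proof (IHn (S k)). lra.
Qed.

Lemma binom_ge1 n k : (k <= n)%nat -> 1 <= binom n k.
Proof.
  revert k; induction n; intros k H; destruct k; simpl; try lra; try lia.
  pose proof (IHn k ltac:(lia)). pose proof (binom_nonneg n (S k)). lra.
Qed.

Lemma binom_le_pow2 n k : binom n k <= 2 ^ n.
Proof.
  revert k; induction n; intros k; destruct k; simpl; try lra.
  - pose proof (IHn 0%nat). rewrite binom_n0 in H. lra.
  - pose proof (IHn k); pose proof (IHn (S k)). lra.
Qed.

Lemma binom_fact n k : (k <= n)%nat -> binom n k = INR (fact n) / (INR (fact k) * INR (fact (n - k))).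
Proof.
  revert k; induction n; intros k H.
  - destruct k; [|lia]. simpl. field.
  - destruct k.
    + rewrite binom_n0, Nat.sub_0_r. simpl (fact 0). rewrite INR_1, Rmult_1_l.
      field. apply INR_fact_neq_0.
    + simpl binom. destruct (Nat.eq_dec k n) as [->|E].
      * rewrite binom_nn, binom_gt, Nat.sub_diag by lia. simpl (fact 0). rewrite INR_1, Rmult_1_r.
        field. apply INR_fact_neq_0.
      * rewrite !IHn by lia. replace (S n - S k)%nat with (n - k)%nat by lia.
        replace (n - k)%nat with (S (n - S k))%nat by lia.
        rewrite !INR_fact_S.
        pose proof (INR_fact_lt_0 k). pose proof (INR_fact_lt_0 (n - S k)). pose proof (INR_fact_lt_0 n).
        assert (INR k + 1 <= INR n) by (rewrite <- S_INR; apply le_INR; lia). pose proof (pos_INR k).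
        rewrite !S_INR, minus_INR, S_INR by lia.
        field; repeat split; lra.
Qed.

Lemma binomial_fsum x y n : (x + y) ^ n = fsum (fun i => binom n i * x ^ i * y ^ (n - i)) (S n).
Proof.
  rewrite binomial, sum_f_R0_fsum. apply fsum_ext; intros.
  rewrite binom_fact by lia. reflexivity.
Qed.

Lemma fsum_binom n : fsum (binom n) (S n) = 2 ^ n.
Proof.
  replace 2 with (1 + 1) by ring. rewrite binomial_fsum.
  apply fsum_ext; intros. rewrite !pow1. ring.
Qed.

Fixpoint rising (x : R) (n : nat) : R :=
  match n with O => 1 | S n' => rising x n' * (x + INR n') end.

Lemma rising_add x m n : rising x (m + n) = rising x m * rising (x + INR m) n.
Proof.
  induction n; simpl; [rewrite Nat.add_0_r; ring|].
  rewrite Nat.add_succ_r. simpl. rewrite IHn, plus_INR. ring.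
Qed.

Lemma rising_S x n : rising x (S n) = x * rising (x + 1) n.
Proof. replace (S n) with (1 + n)%nat by lia. rewrite rising_add. simpl. ring_simplify. auto. Qed.

Lemma rising_pos x n : 0 < x -> 0 < rising x n.
Proof.
  intros Hx; induction n; simpl; [lra|].
  apply Rmult_lt_0_compat; auto. pose proof (pos_INR n); lra.
Qed.

Lemma rising_mono x y n : 0 < x -> x <= y -> rising x n <= rising y n.
Proof.
  intros Hx Hy; induction n; simpl; [lra|]. pose proof (pos_INR n).
  apply Rmult_le_compat; auto; try lra. left; apply rising_pos; auto.
Qed.

Lemma rising_1 n : rising 1 n = INR (fact n).
Proof. induction n; simpl rising; [reflexivity|]. rewrite IHn, INR_fact_S, S_INR. ring. Qed.

Lemma fact_double k : INR (fact (2 * k)) = 4 ^ k * INR (fact k) * rising (1 / 2) k.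
Proof.
  induction k; [simpl; lra|].
  replace (2 * S k)%nat with (S (S (2 * k))) by lia. rewrite !INR_fact_S, IHk. simpl rising. simpl pow.
  rewrite !S_INR, mult_INR. replace (INR 2) with 2 by (simpl; lra). field.
Qed.

(* The even moments of the uniform measure on S^{a-1}:
   E[(w·x)^{2k}] = sph_mom a k ‖x‖^{2k} with sph_mom a k = (2k)! / (4^k k! (a/2)_k). *)
Definition sph_mom (a k : nat) : R := INR (fact (2 * k)) / (4 ^ k * INR (fact k) * rising (INR a / 2) k).

Lemma sph_mom_pos a k : (1 <= a)%nat -> 0 < sph_mom a k.
Proof.
  intros Ha. unfold sph_mom. assert (0 < INR a / 2) by (assert (1 <= INR a) by (apply (le_INR 1); auto); lra).
  pose proof (rising_pos _ k H). pose proof (INR_fact_lt_0 k). pose proof (INR_fact_lt_0 (2 * k)).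
  pose proof (pow_lt 4 k ltac:(lra)).
  apply Rdiv_lt_0_compat; auto. repeat apply Rmult_lt_0_compat; auto.
Qed.

Lemma sph_mom_1 k : sph_mom 1 k = 1.
Proof.
  unfold sph_mom. rewrite fact_double. simpl INR. field.
  split; [apply Rgt_not_eq, rising_pos; lra|].
  split; [apply INR_fact_neq_0 | apply pow_nonzero; lra].
Qed.

Lemma sph_mom_2 k : sph_mom 2 k = binom (2 * k) k / 4 ^ k.
Proof.
  unfold sph_mom. rewrite binom_fact by lia. replace (2 * k - k)%nat with k by lia.
  replace (INR 2 / 2) with 1 by (simpl; lra). rewrite rising_1. field.
  split; [apply INR_fact_neq_0 | apply pow_nonzero; lra].
Qed.

Lemma sph_mom_le1 a k : (1 <= a)%nat -> sph_mom a k <= 1.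
Proof.
  intros Ha. rewrite <- (sph_mom_1 k). unfold sph_mom. assert (1 <= INR a) by (apply (le_INR 1); auto).
  pose proof (INR_fact_lt_0 k). pose proof (INR_fact_lt_0 (2 * k)). pose proof (pow_lt 4 k ltac:(lra)).
  pose proof (rising_pos (INR 1 / 2) k ltac:(simpl; lra)).
  apply Rmult_le_compat_l; [lra|]. apply Rinv_le_contravar.
  - repeat apply Rmult_lt_0_compat; auto.
  - apply Rmult_le_compat_l; [apply Rmult_le_pos; lra|]. apply rising_mono; simpl; lra.
Qed.

(* The mixed moment E[s^al (1-s)^be] of the law of s = ‖first a coordinates‖² for the uniform
   measure on S^{a+1}, i.e. Beta(a/2, 1): (a/2) be! / (a/2 + al)_{be+1}. *)
Definition beta_mom (a al be : nat) : R :=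
  (INR a / 2) * INR (fact be) / rising (INR a / 2 + INR al) (S be).

Lemma beta_mom_nonneg a al be : (1 <= a)%nat -> 0 <= beta_mom a al be.
Proof.
  intros Ha. unfold beta_mom. assert (1 <= INR a) by (apply (le_INR 1); auto). pose proof (pos_INR al).
  pose proof (INR_fact_lt_0 be). pose proof (rising_pos (INR a / 2 + INR al) (S be) ltac:(lra)).
  apply Rdiv_nonneg; auto. apply Rmult_le_pos; lra.
Qed.

Lemma beta_mom_le1 a al be : (1 <= a)%nat -> beta_mom a al be <= 1.
Proof.
  intros Ha. unfold beta_mom. assert (1 <= INR a) by (apply (le_INR 1); auto). pose proof (pos_INR al).
  pose proof (INR_fact_lt_0 be). rewrite rising_S.
  apply Rdiv_le_one; [apply Rmult_lt_0_compat; [lra | apply rising_pos; lra]|].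
  rewrite <- rising_1. apply Rmult_le_compat; try lra.
  - left; apply rising_pos; lra.
  - apply rising_mono; lra.
Qed.

Definition partial_frac (be : nat) (x : R) : R :=
  fsum (fun j => binom be j * (-1) ^ j / (x + INR j)) (S be).

Lemma partial_frac_S be x : 0 < x -> partial_frac (S be) x = partial_frac be x - partial_frac be (x + 1).
Proof.
  intros Hx. unfold partial_frac. rewrite fsum_shift. simpl binom at 1.
  rewrite (fsum_ext _ (fun i => binom be i * (-1) ^ (S i) / (x + INR (S i))
                                 + binom be (S i) * (-1) ^ (S i) / (x + INR (S i))))
    by (intros i _; simpl binom; unfold Rdiv; ring).
  rewrite fsum_add.
  assert (E1 : fsum (fun i => binom be i * (-1) ^ (S i) / (x + INR (S i))) (S be)
               = - fsum (fun j => binom be j * (-1) ^ j / (x + 1 + INR j)) (S be)).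
  { match goal with |- _ = - ?X => replace (- X) with ((-1) * X) by ring end. rewrite <- fsum_scal.
    apply fsum_ext; intros. rewrite S_INR. simpl pow. unfold Rdiv.
    replace (x + (INR i + 1)) with (x + 1 + INR i) by ring. ring. }
  assert (E2 : fsum (fun i => binom be (S i) * (-1) ^ (S i) / (x + INR (S i))) (S be)
               = fsum (fun j => binom be j * (-1) ^ j / (x + INR j)) (S be) - 1 / x).
  { set (g := fun j => binom be j * (-1) ^ j / (x + INR j)).
    pose proof (fsum_shift g (S be)) as H. rewrite fsum_S in H.
    assert (g (S be) = 0) by (unfold g; rewrite binom_gt by lia; unfold Rdiv; ring).
    assert (g 0%nat = 1 / x) by (unfold g; rewrite binom_n0; simpl pow; rewrite Rplus_0_r; unfold Rdiv; ring).
    change (fsum (fun i => g (S i)) (S be) = fsum g (S be) - 1 / x). lra. }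
  rewrite E1, E2. simpl pow. simpl INR. rewrite Rplus_0_r. unfold Rdiv. ring.
Qed.

Lemma partial_frac_closed be : forall x, 0 < x -> partial_frac be x = INR (fact be) / rising x (S be).
Proof.
  induction be as [|be IH]; intros x Hx.
  - unfold partial_frac. simpl. field. lra.
  - rewrite partial_frac_S, !IH by lra.
    assert (E1 : rising x (S (S be)) = rising x (S be) * (x + INR (S be))) by reflexivity.
    assert (E2 : rising x (S (S be)) = x * rising (x + 1) (S be)) by apply rising_S.
    pose proof (rising_pos x (S be) Hx). pose proof (rising_pos (x + 1) (S be) ltac:(lra)).
    assert (EB : rising (x + 1) (S be) = rising x (S be) * (x + INR (S be)) / x)
      by (rewrite <- E1, E2; field; lra).
    rewrite E1, EB, INR_fact_S, S_INR. pose proof (pos_INR be). field. repeat split; lra.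
Qed.

(* Expanding (1-s)^be: the Beta moment is an alternating sum of pure moments a/(a + 2(al+j)). *)
Lemma beta_mom_alternating a al be : (1 <= a)%nat ->
  beta_mom a al be = fsum (fun j => binom be j * (-1) ^ j * (INR a / (INR a + 2 * INR (al + j)))) (S be).
Proof.
  intros Ha. assert (1 <= INR a) by (apply (le_INR 1); auto). pose proof (pos_INR al).
  unfold beta_mom. unfold Rdiv at 1. rewrite Rmult_assoc.
  fold (Rdiv (INR (fact be)) (rising (INR a / 2 + INR al) (S be))).
  rewrite <- partial_frac_closed by lra. unfold partial_frac. rewrite <- fsum_scal.
  apply fsum_ext; intros j _. rewrite plus_INR. pose proof (pos_INR j). field. lra.
Qed.

(* Sphere moments factor through the splitting R^{a+2} = R^a × R^2:
   C(2k, 2al) B(al,be) m_a(al) m_2(be) = C(k, al) m_{a+2}(k) with k = al + be. *)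
Lemma sph_mom_split a al be : (1 <= a)%nat ->
  binom (2 * (al + be)) (2 * al) * beta_mom a al be * sph_mom a al * sph_mom 2 be
  = binom (al + be) al * sph_mom (a + 2) (al + be).
Proof.
  intros Ha. assert (1 <= INR a) by (apply (le_INR 1); auto). pose proof (pos_INR al).
  rewrite !binom_fact by lia. replace (2 * (al + be) - 2 * al)%nat with (2 * be)%nat by lia.
  replace (al + be - al)%nat with be by lia.
  unfold sph_mom, beta_mom. replace (INR 2 / 2) with 1 by (simpl; lra). rewrite rising_1.
  replace (INR (a + 2) / 2) with (INR a / 2 + 1) by (rewrite plus_INR; simpl; lra).
  set (g := INR a / 2). assert (Hg : 0 < g) by (unfold g; lra).
  assert (E : g * rising (g + 1) (al + be) = rising g al * rising (g + INR al) (S be))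
    by (rewrite <- rising_S, <- rising_add; f_equal; lia).
  assert (E' : rising (g + 1) (al + be) = rising g al * rising (g + INR al) (S be) / g)
    by (rewrite <- E; field; lra).
  rewrite E', pow_add.
  pose proof (INR_fact_lt_0 al). pose proof (INR_fact_lt_0 be). pose proof (INR_fact_lt_0 (2 * al)).
  pose proof (INR_fact_lt_0 (2 * be)). pose proof (INR_fact_lt_0 (al + be)).
  pose proof (rising_pos g al Hg). pose proof (rising_pos (g + INR al) (S be) ltac:(lra)).
  pose proof (pow_lt 4 al ltac:(lra)). pose proof (pow_lt 4 be ltac:(lra)).
  field. repeat split; lra.
Qed.

(* ** Cubature rules on spheres *)

Definition moment (a : nat) (mu : rule) (x : nat -> R) (j : nat) : R :=
  lsum mu (fun p => fst p * dot a (snd p) x ^ j).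

Record cubature (a : nat) (mu : rule) (K : nat) (eta : R) : Prop := {
  cub_nonneg : forall p, In p mu -> 0 <= fst p;
  cub_mass : lsum mu fst = 1;
  cub_sphere : forall p, In p mu -> dot a (snd p) (snd p) = 1;
  cub_odd : forall x k, moment a mu x (2 * k + 1) = 0;
  cub_even : forall x k, (k <= K)%nat ->
    Rabs (moment a mu x (2 * k) - sph_mom a k * dot a x x ^ k) <= eta * dot a x x ^ k
}.

Lemma cubature_weaken a mu K e e' : e <= e' -> cubature a mu K e -> cubature a mu K e'.
Proof.
  intros He [Hw Hs Hu Ho Hev]. constructor; auto. intros x k Hk.
  eapply Rle_trans; [apply Hev; auto|].
  apply Rmult_le_compat_r; auto. apply pow_le, dot_nonneg.
Qed.

Lemma moment_even_bound a mu x k :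
  (forall p, In p mu -> 0 <= fst p) -> lsum mu fst = 1 ->
  (forall p, In p mu -> dot a (snd p) (snd p) = 1) ->
  Rabs (moment a mu x (2 * k)) <= dot a x x ^ k.
Proof.
  intros Hw Hs Hu. unfold moment. eapply Rle_trans; [apply lsum_abs|].
  apply Rle_trans with (lsum mu (fun p => fst p * dot a x x ^ k)).
  - apply lsum_le; intros p Hp. rewrite Rabs_mult, Rabs_right by (apply Rle_ge; auto).
    apply Rmult_le_compat_l; auto. rewrite pow_mult, Rabs_right by (apply Rle_ge, pow_le, pow2_ge_0).
    apply pow_incr. split; [apply pow2_ge_0|].
    pose proof (dot_cauchy_schwarz a (snd p) x). rewrite Hu in H by auto. simpl. lra.
  - rewrite lsum_scal_r, Hs. lra.
Qed.

Lemma neg_pow_even y k : (- y) ^ (2 * k) = y ^ (2 * k).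
Proof. rewrite !pow_mult. replace ((- y) ^ 2) with (y ^ 2) by ring. auto. Qed.

Lemma neg_pow_odd y k : (- y) ^ (2 * k + 1) = - y ^ (2 * k + 1).
Proof. replace (2 * k + 1)%nat with (S (2 * k)) by lia. rewrite <- !tech_pow_Rmult, neg_pow_even. ring. Qed.

Definition unit_vec0 (s : R) : nat -> R := fun i => match i with O => s | _ => 0 end.
Definition rule_S0 : rule := (1 / 2, unit_vec0 1) :: (1 / 2, unit_vec0 (-1)) :: nil.

Lemma dot_unit_vec0 s x : dot 1 (unit_vec0 s) x = s * x 0%nat.
Proof. rewrite dot_fsum. simpl. ring. Qed.

Lemma cubature_S0 K eta : 0 <= eta -> cubature 1 rule_S0 K eta.
Proof.
  intros He. constructor.
  - intros p [<-|[<-|[]]]; simpl; lra.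
  - simpl. lra.
  - intros p [<-|[<-|[]]]; cbn [snd]; rewrite dot_unit_vec0; simpl; lra.
  - intros x k. unfold moment, lsum, rule_S0. cbn [fold_right fst snd]. rewrite !dot_unit_vec0.
    replace (-1 * x 0%nat) with (- (1 * x 0%nat)) by ring. rewrite neg_pow_odd. ring.
  - intros x k _. unfold moment, lsum, rule_S0. cbn [fold_right fst snd]. rewrite !dot_unit_vec0, sph_mom_1.
    replace (-1 * x 0%nat) with (- (1 * x 0%nat)) by ring.
    rewrite neg_pow_even, Rmult_1_l.
    assert (Hx : dot 1 x x ^ k = x 0%nat ^ (2 * k))
      by (rewrite dot_fsum, pow_mult; simpl; f_equal; ring).
    rewrite Hx. replace (1 / 2 * x 0%nat ^ (2 * k) + (1 / 2 * x 0%nat ^ (2 * k) + 0) - 1 * x 0%nat ^ (2 * k))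
      with 0 by field.
    rewrite Rabs_R0. apply Rmult_le_pos; auto. rewrite pow_mult. apply pow_le, pow2_ge_0.
Qed.

(* ** The product construction S^{a-1} × S^1 × [0,1] → S^{a+1} *)

Definition tail2 (a : nat) (y : nat -> R) : nat -> R := fun j => y (a + j)%nat.

Definition join_vec (a : nat) (v c : nat -> R) (s : R) : nat -> R :=
  fun i => if (i <? a)%nat then sqrt s * v i else sqrt (1 - s) * c (i - a)%nat.

Lemma dot_split a y x : dot (a + 2) y x = dot a y x + dot 2 (tail2 a y) (tail2 a x).
Proof. rewrite !dot_fsum, fsum_split. reflexivity. Qed.

Lemma dot_join_head a v c s x : dot a (join_vec a v c s) x = sqrt s * dot a v x.
Proof.
  rewrite !dot_fsum, <- fsum_scal. apply fsum_ext; intros i Hi. unfold join_vec.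
  replace (i <? a)%nat with true by (symmetry; apply Nat.ltb_lt; auto). ring.
Qed.

Lemma tail2_join a v c s i : tail2 a (join_vec a v c s) i = sqrt (1 - s) * c i.
Proof.
  unfold join_vec, tail2.
  replace (a + i <? a)%nat with false by (symmetry; apply Nat.ltb_ge; lia).
  replace (a + i - a)%nat with i by lia. reflexivity.
Qed.

Lemma dot_join a v c s x :
  dot (a + 2) (join_vec a v c s) x = sqrt s * dot a v x + sqrt (1 - s) * dot 2 c (tail2 a x).
Proof.
  rewrite dot_split, dot_join_head. f_equal.
  rewrite !dot_fsum, <- fsum_scal. apply fsum_ext; intros; rewrite tail2_join; ring.
Qed.

Lemma dot_join_self a v c s : 0 <= s <= 1 ->
  dot (a + 2) (join_vec a v c s) (join_vec a v c s) = s * dot a v v + (1 - s) * dot 2 c c.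
Proof.
  intros Hs. rewrite dot_join, dot_sym, dot_join_head.
  replace (dot 2 c (tail2 a (join_vec a v c s))) with (sqrt (1 - s) * dot 2 c c)
    by (rewrite !dot_fsum, <- fsum_scal; apply fsum_ext; intros; rewrite tail2_join; ring).
  replace (sqrt s * (sqrt s * dot a v v)) with ((sqrt s * sqrt s) * dot a v v) by ring.
  replace (sqrt (1 - s) * (sqrt (1 - s) * dot 2 c c)) with ((sqrt (1 - s) * sqrt (1 - s)) * dot 2 c c) by ring.
  rewrite !sqrt_sqrt by lra. reflexivity.
Qed.

Definition product_rule (a : nat) (mu nu : rule) (T : list (R * R)) : rule :=
  flat_map (fun pr => flat_map (fun pc =>
    map (fun pt => (fst pr * fst pc * fst pt, join_vec a (snd pr) (snd pc) (snd pt))) T) nu) mu.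

Lemma lsum_product_rule a mu nu T f : lsum (product_rule a mu nu T) f =
  lsum mu (fun pr => lsum nu (fun pc => lsum T (fun pt =>
    f (fst pr * fst pc * fst pt, join_vec a (snd pr) (snd pc) (snd pt))))).
Proof.
  unfold product_rule. rewrite lsum_flat_map. apply lsum_ext; intros.
  rewrite lsum_flat_map. apply lsum_ext; intros. rewrite lsum_map. auto.
Qed.

Lemma in_product_rule a mu nu T p : In p (product_rule a mu nu T) ->
  exists pr pc pt, In pr mu /\ In pc nu /\ In pt T /\
    p = (fst pr * fst pc * fst pt, join_vec a (snd pr) (snd pc) (snd pt)).
Proof.
  unfold product_rule. intros H.
  apply in_flat_map in H as [pr [H1 H]]. apply in_flat_map in H as [pc [H2 H]].
  apply in_map_iff in H as [pt [H3 H]]. exists pr, pc, pt; auto.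
Qed.

Lemma lsum_triple_product {A B C} (L1 : list A) (L2 : list B) (L3 : list C) (k : R) X Y Z :
  lsum L1 (fun r => lsum L2 (fun c => lsum L3 (fun t => k * X t * Y r * Z c)))
  = k * lsum L3 X * lsum L1 Y * lsum L2 Z.
Proof.
  transitivity (lsum L1 (fun r => lsum L2 (fun c => (k * Y r * Z c) * lsum L3 X))).
  { apply lsum_ext; intros r _. apply lsum_ext; intros c _.
    rewrite <- lsum_scal. apply lsum_ext; intros; ring. }
  transitivity (lsum L1 (fun r => (k * Y r * lsum L3 X) * lsum L2 Z)).
  { apply lsum_ext; intros r _. rewrite <- lsum_scal. apply lsum_ext; intros; ring. }
  rewrite lsum_scal_r. f_equal. rewrite <- lsum_scal. apply lsum_ext; intros; ring.
Qed.

Definition radial_moment (T : list (R * R)) (i l : nat) : R :=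
  lsum T (fun pt => fst pt * sqrt (snd pt) ^ i * sqrt (1 - snd pt) ^ l).

Lemma moment_product_rule a mu nu T x j :
  moment (a + 2) (product_rule a mu nu T) x j
  = fsum (fun i => binom j i * radial_moment T i (j - i) * moment a mu x i
                   * moment 2 nu (tail2 a x) (j - i)) (S j).
Proof.
  set (t := fun pr pc pt i => binom j i * (fst pt * sqrt (snd pt) ^ i * sqrt (1 - snd pt) ^ (j - i))
            * (fst pr * dot a (snd pr) x ^ i) * (fst pc * dot 2 (snd pc) (tail2 a x) ^ (j - i))).
  unfold moment. rewrite lsum_product_rule. cbn [fst snd].
  transitivity (lsum mu (fun pr => lsum nu (fun pc => lsum T (fun pt => fsum (t pr pc pt) (S j))))).
  - apply lsum_ext; intros pr _. apply lsum_ext; intros pc _. apply lsum_ext; intros pt _.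
    rewrite dot_join, binomial_fsum, <- fsum_scal. apply fsum_ext; intros i _.
    unfold t. rewrite !Rpow_mult_distr. ring.
  - rewrite (lsum_ext mu _ (fun pr => fsum (fun i => lsum nu (fun pc => lsum T (fun pt => t pr pc pt i))) (S j))).
    + rewrite (lsum_fsum mu (fun pr i => lsum nu (fun pc => lsum T (fun pt => t pr pc pt i)))).
      apply fsum_ext; intros i _. unfold radial_moment, t.
      apply (lsum_triple_product mu nu T (binom j i)
               (fun pt => fst pt * sqrt (snd pt) ^ i * sqrt (1 - snd pt) ^ (j - i))
               (fun pr => fst pr * dot a (snd pr) x ^ i)
               (fun pc => fst pc * dot 2 (snd pc) (tail2 a x) ^ (j - i))).
    + intros pr _. rewrite <- (lsum_fsum nu (fun pc i => lsum T (fun pt => t pr pc pt i))).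
      apply lsum_ext; intros pc _. rewrite <- (lsum_fsum T (fun pt i => t pr pc pt i)). auto.
Qed.

Lemma product_error Tv E SR mR SC mC dl e1 e2 Q1 Q2 :
  Rabs (Tv - E) <= dl -> 0 <= E <= 1 -> Rabs SR <= Q1 -> 0 <= mR <= Q1 ->
  Rabs (SR - mR) <= e1 * Q1 -> Rabs SC <= Q2 -> Rabs (SC - mC) <= e2 * Q2 ->
  Rabs (Tv * SR * SC - E * mR * mC) <= (dl + e1 + e2) * Q1 * Q2.
Proof.
  intros H1 H2 H3 H4 H5 H6 H7.
  replace (Tv * SR * SC - E * mR * mC)
    with ((Tv - E) * SR * SC + E * (SR - mR) * SC + E * mR * (SC - mC)) by ring.
  assert (HQ2 : 0 <= Q2) by (pose proof (Rabs_pos SC); lra).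
  eapply Rle_trans; [apply Rabs_triang|]. eapply Rle_trans; [apply Rplus_le_compat_r, Rabs_triang|].
  rewrite !Rabs_mult, (Rabs_right E), (Rabs_right mR) by lra.
  pose proof (Rabs_pos (Tv - E)). pose proof (Rabs_pos SR). pose proof (Rabs_pos SC).
  pose proof (Rabs_pos (SR - mR)). pose proof (Rabs_pos (SC - mC)).
  assert (A1 : Rabs (Tv - E) * Rabs SR * Rabs SC <= dl * Q1 * Q2)
    by (apply Rmult_le_compat; auto; [apply Rmult_le_pos; auto | apply Rmult_le_compat; auto]).
  assert (A2 : E * Rabs (SR - mR) * Rabs SC <= 1 * (e1 * Q1) * Q2)
    by (apply Rmult_le_compat; auto; [apply Rmult_le_pos; lra | apply Rmult_le_compat; lra]).
  assert (A3 : E * mR * Rabs (SC - mC) <= 1 * Q1 * (e2 * Q2))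
    by (apply Rmult_le_compat; auto; [apply Rmult_le_pos; lra | apply Rmult_le_compat; lra]).
  lra.
Qed.

Lemma sqrt_pow_even s n : 0 <= s -> sqrt s ^ (2 * n) = s ^ n.
Proof. intros Hs. rewrite pow_mult, pow2_sqrt; auto. Qed.

Section ProductCubature.
Variables (a K : nat) (mu nu : rule) (T : list (R * R)) (eta1 eta2 dl : R).
Hypothesis a_pos : (1 <= a)%nat.
Hypothesis mu_cub : cubature a mu K eta1.
Hypothesis nu_cub : cubature 2 nu K eta2.
Hypothesis T_nonneg : forall p, In p T -> 0 <= fst p.
Hypothesis T_mass : lsum T fst = 1.
Hypothesis T_range : forall p, In p T -> 0 <= snd p <= 1.
Hypothesis T_beta : forall al be, (al + be <= K)%nat ->
  Rabs (lsum T (fun pt => fst pt * snd pt ^ al * (1 - snd pt) ^ be) - beta_mom a al be) <= dl.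

Let P := product_rule a mu nu T.

Lemma product_odd x k : moment (a + 2) P x (2 * k + 1) = 0.
Proof.
  unfold P. rewrite moment_product_rule, (fsum_ext _ (fun _ => 0)); [rewrite fsum_const; ring|].
  intros i Hi. destruct (Nat.Even_or_Odd i) as [[m ->]|[m ->]].
  - replace (2 * k + 1 - 2 * m)%nat with (2 * (k - m) + 1)%nat by lia.
    rewrite (cub_odd _ _ _ _ nu_cub). ring.
  - rewrite (cub_odd _ _ _ _ mu_cub). ring.
Qed.

(* Only the terms with an even power of the first factor survive. *)
Lemma product_even_expand x k :
  moment (a + 2) P x (2 * k)
  = fsum (fun al => binom (2 * k) (2 * al) * radial_moment T (2 * al) (2 * (k - al))
                    * moment a mu x (2 * al) * moment 2 nu (tail2 a x) (2 * (k - al))) (S k).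
Proof.
  unfold P. rewrite moment_product_rule. replace (S (2 * k)) with (2 * k + 1)%nat by lia.
  rewrite fsum_even_odd, (fsum_ext (fun i => _) (fun _ => 0) k)
    by (intros i _; rewrite (cub_odd _ _ _ _ mu_cub); ring).
  rewrite fsum_const, Rmult_0_r, Rplus_0_r. replace (k + 1)%nat with (S k) by lia.
  apply fsum_ext; intros al Hal. replace (2 * k - 2 * al)%nat with (2 * (k - al))%nat by lia. reflexivity.
Qed.

Lemma product_term_error x al be : (al + be <= K)%nat ->
  Rabs (radial_moment T (2 * al) (2 * be) * moment a mu x (2 * al) * moment 2 nu (tail2 a x) (2 * be)
        - beta_mom a al be * (sph_mom a al * dot a x x ^ al)
          * (sph_mom 2 be * dot 2 (tail2 a x) (tail2 a x) ^ be))
  <= (dl + eta1 + eta2) * dot a x x ^ al * dot 2 (tail2 a x) (tail2 a x) ^ be.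
Proof.
  intros Hab. destruct mu_cub as [Rw Rs Ru _ Re], nu_cub as [Cw Cs Cu _ Ce].
  pose proof (dot_nonneg a x).
  apply product_error.
  - unfold radial_moment.
    rewrite (lsum_ext T _ (fun pt => fst pt * snd pt ^ al * (1 - snd pt) ^ be)); [apply T_beta; lia|].
    intros pt Hpt. destruct (T_range pt Hpt). rewrite !sqrt_pow_even by lra. auto.
  - split; [apply beta_mom_nonneg | apply beta_mom_le1]; auto.
  - apply moment_even_bound; auto.
  - split.
    + apply Rmult_le_pos; [left; apply sph_mom_pos; auto | apply pow_le; auto].
    + rewrite <- (Rmult_1_l (dot a x x ^ al)) at 2.
      apply Rmult_le_compat_r; [apply pow_le; auto | apply sph_mom_le1; auto].
  - apply Re; lia.
  - apply moment_even_bound; auto.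
  - apply Ce; lia.
Qed.

Lemma product_even x k : (k <= K)%nat ->
  Rabs (moment (a + 2) P x (2 * k) - sph_mom (a + 2) k * dot (a + 2) x x ^ k)
  <= 4 ^ K * (dl + eta1 + eta2) * dot (a + 2) x x ^ k.
Proof.
  intros Hk. set (q1 := dot a x x). set (q2 := dot 2 (tail2 a x) (tail2 a x)).
  rewrite product_even_expand, dot_split. fold q1 q2.
  rewrite binomial_fsum, <- fsum_scal, <- fsum_scal, <- fsum_sub.
  eapply Rle_trans; [apply fsum_abs|]. apply fsum_le. intros al Hal.
  set (be := (k - al)%nat). replace (2 * k - 2 * al)%nat with (2 * be)%nat by lia.
  replace (k - al)%nat with be by lia. assert (Hk2 : k = (al + be)%nat) by lia.
  pose proof (sph_mom_split a al be a_pos) as Split. rewrite <- Hk2 in Split.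
  set (X := beta_mom a al be * (sph_mom a al * q1 ^ al) * (sph_mom 2 be * q2 ^ be)).
  replace (sph_mom (a + 2) k * (binom k al * q1 ^ al * q2 ^ be)) with (binom (2 * k) (2 * al) * X)
    by (unfold X; transitivity ((binom k al * sph_mom (a + 2) k) * (q1 ^ al * q2 ^ be));
        [rewrite <- Split; ring | ring]).
  match goal with |- Rabs (?B * ?R * ?S1 * ?S2 - _) <= _ =>
    replace (B * R * S1 * S2 - B * X) with (B * (R * S1 * S2 - X)) by ring end.
  rewrite Rabs_mult, (Rabs_right (binom _ _)) by (apply Rle_ge, binom_nonneg).
  assert (B1 : binom (2 * k) (2 * al) <= 4 ^ K * binom k al).
  { eapply Rle_trans; [apply binom_le_pow2|]. rewrite pow_mult. replace (2 ^ 2) with 4 by ring.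
    rewrite <- (Rmult_1_r (4 ^ k)). apply Rmult_le_compat; try lra.
    - apply pow_le; lra.
    - apply Rle_pow; [lra | lia].
    - apply binom_ge1; lia. }
  eapply Rle_trans.
  - apply Rmult_le_compat; [apply binom_nonneg | apply Rabs_pos | apply B1 | apply product_term_error; lia].
  - fold q1 q2. right; ring.
Qed.

Lemma cubature_product : cubature (a + 2) P K (4 ^ K * (dl + eta1 + eta2)).
Proof.
  destruct mu_cub as [Rw Rs Ru _ _], nu_cub as [Cw Cs Cu _ _]. constructor.
  - intros p Hp. destruct (in_product_rule _ _ _ _ _ Hp) as [pr [pc [pt [H1 [H2 [H3 ->]]]]]].
    simpl. repeat apply Rmult_le_pos; auto.
  - unfold P. rewrite lsum_product_rule. simpl fst.
    rewrite (lsum_ext mu _ (fun r => lsum nu (fun c => lsum T (fun t => 1 * fst t * fst r * fst c))))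
      by (intros; apply lsum_ext; intros; apply lsum_ext; intros; ring).
    rewrite lsum_triple_product, Rs, Cs, T_mass. ring.
  - intros p Hp. destruct (in_product_rule _ _ _ _ _ Hp) as [pr [pc [pt [H1 [H2 [H3 ->]]]]]].
    simpl. rewrite dot_join_self by auto. rewrite Ru, Cu by auto. ring.
  - apply product_odd.
  - intros x k Hk. apply product_even; auto.
Qed.

End ProductCubature.

(* ** An exact rule on the circle *)

Lemma polar y0 y1 : exists r phi, 0 <= r /\ y0 = r * cos phi /\ y1 = r * sin phi.
Proof.
  set (r := sqrt (y0 * y0 + y1 * y1)).
  assert (Hr : 0 <= r) by apply sqrt_pos.
  assert (Hr2 : r * r = y0 * y0 + y1 * y1) by (apply sqrt_sqrt; nra).
  destruct (Req_dec r 0) as [E|E].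
  - exists 0, 0. assert (y0 = 0 /\ y1 = 0) as [-> ->] by (rewrite E in Hr2; nra). split; [lra | split; ring].
  - set (c := y0 / r).
    assert (Hc : -1 <= c <= 1).
    { unfold c. assert (y0 * y0 <= r * r) by nra.
      split; apply Rmult_le_reg_r with r; try lra; unfold Rdiv; rewrite Rmult_assoc, Rinv_l; nra. }
    assert (Hs : sqrt (1 - c²) * r = Rabs y1).
    { rewrite <- (sqrt_Rsqr r), <- sqrt_mult_alt, <- sqrt_Rsqr_abs by (unfold Rsqr in *; nra).
      f_equal. unfold c, Rsqr.
      replace ((1 - y0 / r * (y0 / r)) * (r * r)) with (r * r - y0 * y0) by (field; auto). lra. }
    destruct (Rle_dec 0 y1).
    + exists r, (acos c). rewrite cos_acos, sin_acos by auto.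
      split; [auto | split; [unfold c; field; auto | rewrite Rmult_comm, Hs, Rabs_right; lra]].
    + exists r, (- acos c). rewrite cos_neg, sin_neg, cos_acos, sin_acos by auto.
      split; [auto | split; [unfold c; field; auto|]].
      replace (r * - sqrt (1 - c²)) with (- (sqrt (1 - c²) * r)) by ring. rewrite Hs, Rabs_left; lra.
Qed.

Lemma cos_pow_reduction n x :
  cos x ^ n = / 2 ^ n * fsum (fun j => binom n j * cos ((INR n - 2 * INR j) * x)) (S n).
Proof.
  induction n as [|n IH].
  - simpl. replace ((0 - 2 * 0) * x) with 0 by ring. rewrite cos_0. field.
  - rewrite <- tech_pow_Rmult, IH.
    set (g := fun j => binom n j * cos ((INR (S n) - 2 * INR j) * x)).
    assert (H1 : fsum (fun j => binom (S n) j * cos ((INR (S n) - 2 * INR j) * x)) (S (S n))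
                 = cos (INR (S n) * x) + fsum (fun i => binom n i * cos ((INR n - 1 - 2 * INR i) * x)) (S n)
                   + fsum (fun i => g (S i)) (S n)).
    { rewrite fsum_shift, binom_n0, Rmult_0_r, Rminus_0_r, Rmult_1_l, Rplus_assoc, <- fsum_add. f_equal.
      apply fsum_ext; intros i _. unfold g. simpl binom. rewrite !S_INR.
      replace ((INR n + 1 - 2 * (INR i + 1)) * x) with ((INR n - 1 - 2 * INR i) * x) by ring. ring. }
    assert (H2 : fsum (fun i => g (S i)) (S n) = fsum g (S n) - cos (INR (S n) * x)).
    { pose proof (fsum_shift g (S n)) as H. rewrite fsum_S in H.
      assert (g (S n) = 0) by (unfold g; rewrite binom_gt by lia; ring).
      assert (g 0%nat = cos (INR (S n) * x)) by (unfold g; rewrite binom_n0, INR_0, Rmult_1_l; f_equal; ring).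
      lra. }
    rewrite H1, H2.
    replace (cos (INR (S n) * x) + fsum (fun i => binom n i * cos ((INR n - 1 - 2 * INR i) * x)) (S n)
             + (fsum g (S n) - cos (INR (S n) * x)))
      with (fsum (fun i => binom n i * cos ((INR n - 1 - 2 * INR i) * x) + g i) (S n))
      by (rewrite fsum_add; ring).
    match goal with |- cos x * (?c * fsum ?f ?m) = ?c2 * fsum ?h ?m =>
      replace (cos x * (c * fsum f m)) with (c * fsum (fun j => cos x * f j) m) by (rewrite fsum_scal; ring);
      replace (c2 * fsum h m) with (c * fsum (fun j => / 2 * h j) m)
        by (rewrite fsum_scal; simpl; field; apply pow_nonzero; lra) end.
    f_equal. apply fsum_ext; intros i _. unfold g. rewrite S_INR.
    replace ((INR n + 1 - 2 * INR i) * x) with ((INR n - 2 * INR i) * x + x) by ring.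
    replace ((INR n - 1 - 2 * INR i) * x) with ((INR n - 2 * INR i) * x - x) by ring.
    rewrite cos_plus, cos_minus. field.
Qed.

Lemma cos_sum_zero P m al : (0 < m < P)%nat ->
  fsum (fun i => cos (al + INR i * (2 * PI * INR m / INR P))) P = 0.
Proof.
  intros Hm. set (b := 2 * PI * INR m / INR P).
  assert (HP : 0 < INR P) by (apply lt_0_INR; lia).
  assert (Hs : 0 < sin (b / 2)).
  { apply sin_gt_0; unfold b.
    - assert (0 < INR m) by (apply lt_0_INR; lia). pose proof PI_RGT_0.
      apply Rdiv_lt_0_compat; [|lra]. apply Rdiv_lt_0_compat; auto. nra.
    - assert (INR m < INR P) by (apply lt_INR; lia). pose proof PI_RGT_0.
      apply Rmult_lt_reg_r with (2 * INR P); [lra|]. unfold Rdiv. field_simplify; try lra. nra. }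
  apply Rmult_eq_reg_l with (2 * sin (b / 2)); [|lra]. rewrite Rmult_0_r, <- fsum_scal.
  rewrite (fsum_ext _ (fun i => sin (al + INR (S i) * b - b / 2) - sin (al + INR i * b - b / 2))).
  - rewrite (fsum_telescope (fun i => sin (al + INR i * b - b / 2))). simpl INR at 2.
    rewrite Rmult_0_l, Rplus_0_r.
    replace (al + INR P * b - b / 2) with ((al - b / 2) + 2 * INR m * PI) by (unfold b; field; lra).
    rewrite sin_period. ring.
  - intros i _. rewrite S_INR.
    replace (al + (INR i + 1) * b - b / 2) with ((al + INR i * b) + b / 2) by field.
    replace (al + INR i * b - b / 2) with ((al + INR i * b) - b / 2) by field.
    rewrite sin_plus, sin_minus. ring.
Qed.

Definition angle (P i : nat) : R := PI * INR i / INR P.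

Lemma angle_avg_cos_pow P k phi : (k < P)%nat ->
  fsum (fun i => cos (angle P i - phi) ^ (2 * k)) P = INR P * binom (2 * k) k / 4 ^ k.
Proof.
  intros Hk. assert (HP : 0 < INR P) by (apply lt_0_INR; lia).
  set (c := fun j i => cos ((INR (2 * k) - 2 * INR j) * (angle P i - phi))).
  rewrite (fsum_ext _ (fun i => / 2 ^ (2 * k) * fsum (fun j => binom (2 * k) j * c j i) (S (2 * k))))
    by (intros; apply cos_pow_reduction).
  rewrite fsum_scal, fsum_swap.
  rewrite (fsum_ext _ (fun j => binom (2 * k) j * fsum (c j) P)) by (intros; rewrite fsum_scal; auto).
  rewrite (fsum_single _ _ k); [| lia |].
  - rewrite (fsum_ext _ (fun _ => 1)).
    + rewrite fsum_const, pow_mult. replace (2 ^ 2) with 4 by ring. field. apply pow_nonzero; lra.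
    + intros. unfold c. rewrite mult_INR. replace ((INR 2 * INR k - 2 * INR k) * (angle P i - phi)) with 0
        by (simpl; ring). apply cos_0.
  - intros j Hj Hjk. unfold c. destruct (Nat.lt_ge_cases j k) as [Hlt|Hge].
    + rewrite (fsum_ext _ (fun i => cos ((- (2 * INR (k - j)) * phi) + INR i * (2 * PI * INR (k - j) / INR P)))).
      * rewrite cos_sum_zero by lia. ring.
      * intros i _. f_equal. unfold angle. rewrite mult_INR, minus_INR by lia. simpl INR. field. lra.
    + rewrite (fsum_ext _ (fun i => cos ((- (2 * INR (j - k)) * phi) + INR i * (2 * PI * INR (j - k) / INR P)))).
      * rewrite cos_sum_zero by lia. ring.
      * intros i _. rewrite <- cos_neg. f_equal. unfold angle. rewrite mult_INR, minus_INR by lia.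
        simpl INR. field. lra.
Qed.

Definition vec2 (u0 u1 : R) : nat -> R := fun j => match j with O => u0 | S O => u1 | _ => 0 end.

Lemma dot_vec2 u0 u1 y : dot 2 (vec2 u0 u1) y = u0 * y 0%nat + u1 * y 1%nat.
Proof. rewrite dot_fsum. simpl. ring. Qed.

Definition circle_rule (P : nat) : rule :=
  flat_map (fun i => (1 / (2 * INR P), vec2 (cos (angle P i)) (sin (angle P i))) ::
                     (1 / (2 * INR P), vec2 (- cos (angle P i)) (- sin (angle P i))) :: nil) (seq 0 P).

Lemma lsum_circle_rule P f : lsum (circle_rule P) f =
  fsum (fun i => f (1 / (2 * INR P), vec2 (cos (angle P i)) (sin (angle P i)))
                 + f (1 / (2 * INR P), vec2 (- cos (angle P i)) (- sin (angle P i)))) P.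
Proof. unfold circle_rule. rewrite lsum_flat_map, lsum_seq. apply fsum_ext; intros. simpl. ring. Qed.

Lemma in_circle_rule P p : In p (circle_rule P) -> exists i,
  p = (1 / (2 * INR P), vec2 (cos (angle P i)) (sin (angle P i))) \/
  p = (1 / (2 * INR P), vec2 (- cos (angle P i)) (- sin (angle P i))).
Proof.
  unfold circle_rule. intros Hp. apply in_flat_map in Hp as [i [_ [H|[H|[]]]]]; exists i; auto.
Qed.

Lemma cubature_circle P K : (K < P)%nat -> cubature 2 (circle_rule P) K 0.
Proof.
  intros HK. assert (HP : 0 < INR P) by (apply lt_0_INR; lia).
  assert (Hneg : forall i y, dot 2 (vec2 (- cos (angle P i)) (- sin (angle P i))) y
                             = - dot 2 (vec2 (cos (angle P i)) (sin (angle P i))) y)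
    by (intros; rewrite !dot_vec2; ring).
  constructor.
  - intros p Hp. destruct (in_circle_rule P p Hp) as [i [->| ->]]; simpl;
      apply Rdiv_nonneg; lra.
  - rewrite lsum_circle_rule. simpl fst. rewrite fsum_const. field. lra.
  - intros p Hp. destruct (in_circle_rule P p Hp) as [i [->| ->]]; simpl; rewrite dot_vec2; simpl;
      pose proof (sin2_cos2 (angle P i)); unfold Rsqr in *; lra.
  - intros y k. unfold moment. rewrite lsum_circle_rule. cbn [fst snd].
    rewrite (fsum_ext _ (fun _ => 0)); [rewrite fsum_const; ring|].
    intros i _. rewrite Hneg, neg_pow_odd. ring.
  - intros y k Hk. unfold moment. rewrite lsum_circle_rule. cbn [fst snd].
    destruct (polar (y 0%nat) (y 1%nat)) as [r [phi [Hr [E0 E1]]]].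
    assert (Ey : dot 2 y y = r ^ 2)
      by (rewrite dot_fsum; simpl; rewrite E0, E1; pose proof (sin2_cos2 phi); unfold Rsqr in *; nra).
    rewrite (fsum_ext _ (fun i => (1 / INR P * r ^ (2 * k)) * cos (angle P i - phi) ^ (2 * k))).
    + rewrite fsum_scal, angle_avg_cos_pow, sph_mom_2, Ey, <- pow_mult by lia.
      replace (1 / INR P * r ^ (2 * k) * (INR P * binom (2 * k) k / 4 ^ k)
               - binom (2 * k) k / 4 ^ k * r ^ (2 * k)) with 0
        by (field; split; [apply pow_nonzero; lra | lra]).
      rewrite Rabs_R0. lra.
    + intros i _. rewrite Hneg, neg_pow_even, dot_vec2, E0, E1.
      replace (cos (angle P i) * (r * cos phi) + sin (angle P i) * (r * sin phi))
        with (r * cos (angle P i - phi)) by (rewrite cos_minus; ring).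
      rewrite Rpow_mult_distr. field. lra.
Qed.

(* ** A radial rule on [0,1] for the Beta(a/2, 1) law *)

Lemma prefix_mean_le T n p : (forall i j, (i <= j < n + p)%nat -> T i <= T j) ->
  INR (n + p) * fsum T n <= INR n * fsum T (n + p).
Proof.
  intros HT. induction p as [|p IH]; [rewrite Nat.add_0_r; lra|].
  replace (n + S p)%nat with (S (n + p)) by lia. rewrite fsum_S.
  assert (INR (n + p) * fsum T n <= INR n * fsum T (n + p)) by (apply IH; intros; apply HT; lia).
  assert (fsum T n <= INR n * T (n + p)%nat)
    by (rewrite <- fsum_const; apply fsum_le; intros; apply HT; lia).
  rewrite S_INR. lra.
Qed.

Lemma suffix_mean_ge p : forall T n, (forall i j, (i <= j < n + p)%nat -> T i <= T j) ->
  INR n * fsum T (n + p) <= INR (n + p) * fsum (fun i => T (p + i)%nat) n.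
Proof.
  induction p as [|p IH]; intros T n HT; [rewrite Nat.add_0_r; right; reflexivity|].
  replace (n + S p)%nat with (S (n + p)) by lia. rewrite fsum_shift.
  assert (INR n * fsum (fun i => T (S i)) (n + p) <= INR (n + p) * fsum (fun i => T (S p + i)%nat) n)
    by (apply (IH (fun i => T (S i))); intros; apply HT; lia).
  assert (INR n * T 0%nat <= fsum (fun i => T (S p + i)%nat) n)
    by (rewrite <- fsum_const; apply fsum_le; intros; apply HT; lia).
  rewrite S_INR. lra.
Qed.

Definition geom_quot (u v : R) (M : nat) : R := fsum (fun i => v ^ i * u ^ (M - 1 - i)) M.

Lemma pow_sub_factor u v M : v ^ M - u ^ M = (v - u) * geom_quot u v M.
Proof.
  induction M as [|M IH]; [unfold geom_quot; simpl; ring|].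
  unfold geom_quot in *. rewrite fsum_shift. replace (S M - 1 - 0)%nat with M by lia.
  rewrite (fsum_ext _ (fun i => v * (v ^ i * u ^ (M - 1 - i)))).
  - rewrite fsum_scal, Rmult_plus_distr_l.
    replace ((v - u) * (v * fsum (fun i => v ^ i * u ^ (M - 1 - i)) M))
      with (v * ((v - u) * fsum (fun i => v ^ i * u ^ (M - 1 - i)) M)) by ring.
    rewrite <- IH. simpl. ring.
  - intros i Hi. replace (S M - 1 - S i)%nat with (M - 1 - i)%nat by lia. simpl pow. ring.
Qed.

(* Discrete form of u^p ∫_u^v n t^{n-1} ≤ ∫_u^v n t^{n+p-1} ≤ v^p ∫_u^v n t^{n-1}. *)
Lemma pow_increment_bounds (u v : R) (n p : nat) : 0 <= u <= v -> (1 <= n)%nat ->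
  u ^ p * (v ^ n - u ^ n) <= INR n / INR (n + p) * (v ^ (n + p) - u ^ (n + p)) <= v ^ p * (v ^ n - u ^ n).
Proof.
  intros Huv Hn. set (M := (n + p)%nat). set (T := fun i => v ^ i * u ^ (M - 1 - i)).
  assert (HM : 0 < INR M) by (apply lt_0_INR; unfold M; lia).
  assert (Hmono : forall i j, (i <= j < M)%nat -> T i <= T j).
  { intros i j Hij. unfold T. set (d := (j - i)%nat). set (e := (M - 1 - j)%nat).
    replace (M - 1 - i)%nat with (d + e)%nat by (unfold d, e; lia).
    replace j with (i + d)%nat at 1 by (unfold d; lia).
    rewrite !pow_add, <- Rmult_assoc.
    apply Rmult_le_compat_r; [apply pow_le; lra|].
    apply Rmult_le_compat_l; [apply pow_le; lra | apply pow_incr; lra]. }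
  assert (E1 : u ^ p * (v ^ n - u ^ n) = (v - u) * fsum T n).
  { rewrite pow_sub_factor. unfold geom_quot. rewrite Rmult_comm, Rmult_assoc. f_equal.
    rewrite Rmult_comm, <- fsum_scal. apply fsum_ext; intros i Hi. unfold T, M.
    replace (n + p - 1 - i)%nat with ((n - 1 - i) + p)%nat by lia. rewrite pow_add. ring. }
  assert (E2 : v ^ p * (v ^ n - u ^ n) = (v - u) * fsum (fun i => T (p + i)%nat) n).
  { rewrite pow_sub_factor. unfold geom_quot. rewrite Rmult_comm, Rmult_assoc. f_equal.
    rewrite Rmult_comm, <- fsum_scal. apply fsum_ext; intros i Hi. unfold T, M.
    replace (n + p - 1 - (p + i))%nat with (n - 1 - i)%nat by lia. rewrite pow_add. ring. }
  assert (E3 : v ^ M - u ^ M = (v - u) * fsum T M) by (rewrite pow_sub_factor; auto).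
  fold M. rewrite E1, E2, E3.
  pose proof (prefix_mean_le T n p Hmono) as P1. pose proof (suffix_mean_ge p T n Hmono) as P2.
  fold M in P1, P2.
  replace (INR n / INR M * ((v - u) * fsum T M)) with ((v - u) * (INR n * fsum T M / INR M)) by (field; lra).
  split; apply Rmult_le_compat_l; try lra;
    apply Rmult_le_reg_r with (INR M); auto; unfold Rdiv; rewrite Rmult_assoc, Rinv_l; lra.
Qed.

Lemma pow_sub_le (u v : R) n : 0 <= u <= v -> v <= 1 -> v ^ n - u ^ n <= INR n * (v - u).
Proof.
  intros Huv Hv. rewrite pow_sub_factor, Rmult_comm. apply Rmult_le_compat_r; [lra|].
  unfold geom_quot. rewrite <- (Rmult_1_r (INR n)), <- fsum_const. apply fsum_le. intros i Hi.
  rewrite <- (Rmult_1_r 1). apply Rmult_le_compat; try (apply pow_le; lra); apply pow_le_one; lra.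
Qed.

Definition grid (N i : nat) : R := INR i / INR N.

Lemma grid_range N i : (1 <= N)%nat -> (i <= N)%nat -> 0 <= grid N i <= 1.
Proof.
  intros HN Hi. unfold grid. assert (0 < INR N) by (apply lt_0_INR; lia).
  assert (INR i <= INR N) by (apply le_INR; auto). pose proof (pos_INR i).
  split; [apply Rdiv_nonneg; lra | apply Rdiv_le_one; lra].
Qed.

Lemma grid_step N i : (1 <= N)%nat -> grid N (S i) - grid N i = 1 / INR N.
Proof. intros HN. unfold grid. rewrite S_INR. field. apply not_0_INR; lia. Qed.

Lemma grid_end N k : (1 <= N)%nat -> (1 <= k)%nat -> grid N N ^ k - grid N 0 ^ k = 1.
Proof.
  intros HN Hk. unfold grid. rewrite Rdiv_diag by (apply not_0_INR; lia).
  rewrite pow1, INR_0. unfold Rdiv. rewrite Rmult_0_l, pow_i by lia. ring.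
Qed.

(* The list of nodes t_{i+1}² with the masses t_{i+1}^a - t_i^a of the law of t² for t^a uniform. *)
Definition radial_rule (a N : nat) : list (R * R) :=
  map (fun i => (grid N (S i) ^ a - grid N i ^ a, grid N (S i) ^ 2)) (seq 0 N).

Lemma lsum_radial_rule a N f :
  lsum (radial_rule a N) f = fsum (fun i => f (grid N (S i) ^ a - grid N i ^ a, grid N (S i) ^ 2)) N.
Proof. unfold radial_rule. rewrite lsum_map, lsum_seq. auto. Qed.

Lemma in_radial_rule a N p : In p (radial_rule a N) ->
  exists i, (i < N)%nat /\ p = (grid N (S i) ^ a - grid N i ^ a, grid N (S i) ^ 2).
Proof.
  unfold radial_rule. intros H. apply in_map_iff in H as [i [E H]].
  apply in_seq in H. exists i. split; auto. lia.
Qed.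

Lemma grid_pow_mono N i k : (1 <= N)%nat -> (i < N)%nat -> grid N i ^ k <= grid N (S i) ^ k.
Proof.
  intros HN Hi. pose proof (grid_range N i HN ltac:(lia)). pose proof (grid_step N i HN).
  assert (0 < 1 / INR N) by (apply Rdiv_lt_0_compat; [lra | apply lt_0_INR; lia]).
  apply pow_incr; lra.
Qed.

Lemma radial_rule_nonneg a N p : (1 <= N)%nat -> In p (radial_rule a N) -> 0 <= fst p.
Proof.
  intros HN Hp. destruct (in_radial_rule _ _ _ Hp) as [i [Hi ->]]. simpl.
  pose proof (grid_pow_mono N i a HN Hi). lra.
Qed.

Lemma radial_rule_mass a N : (1 <= N)%nat -> (1 <= a)%nat -> lsum (radial_rule a N) fst = 1.
Proof.
  intros HN Ha. rewrite lsum_radial_rule. simpl fst.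
  rewrite (fsum_telescope (fun i => grid N i ^ a)). apply grid_end; auto.
Qed.

Lemma radial_rule_range a N p : (1 <= N)%nat -> In p (radial_rule a N) -> 0 <= snd p <= 1.
Proof.
  intros HN Hp. destruct (in_radial_rule _ _ _ Hp) as [i [Hi ->]]. cbn [snd].
  pose proof (grid_range N (S i) HN ltac:(lia)). split; [apply pow_le | apply pow_le_one]; lra.
Qed.

Section RadialMoment.
Variables (a N m : nat).
Hypothesis N_pos : (1 <= N)%nat.
Hypothesis a_pos : (1 <= a)%nat.

Let t := grid N.
(* Upper and lower Riemann-type sums of the m-th moment, and the exact value. *)
Let U := fsum (fun i => (t (S i) ^ a - t i ^ a) * (t (S i) ^ 2) ^ m) N.
Let L := fsum (fun i => (t (S i) ^ a - t i ^ a) * t i ^ (2 * m)) N.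
Let X := fsum (fun i => INR a / INR (a + 2 * m) * (t (S i) ^ (a + 2 * m) - t i ^ (a + 2 * m))) N.

Lemma radial_exact : X = INR a / (INR a + 2 * INR m).
Proof.
  unfold X. rewrite fsum_scal, (fsum_telescope (fun i => t i ^ (a + 2 * m))).
  unfold t. rewrite grid_end by lia. rewrite plus_INR, mult_INR. simpl (INR 2). field.
  pose proof (pos_INR m). assert (1 <= INR a) by (apply (le_INR 1); auto). lra.
Qed.

Lemma radial_sandwich : L <= X <= U.
Proof.
  assert (Hb : forall i, (i < N)%nat ->
    t i ^ (2 * m) * (t (S i) ^ a - t i ^ a)
    <= INR a / INR (a + 2 * m) * (t (S i) ^ (a + 2 * m) - t i ^ (a + 2 * m))
    <= t (S i) ^ (2 * m) * (t (S i) ^ a - t i ^ a)).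
  { intros i Hi. pose proof (grid_range N i N_pos ltac:(lia)). pose proof (grid_pow_mono N i 1 N_pos Hi).
    rewrite !pow_1 in *. apply pow_increment_bounds; auto. unfold t; lra. }
  split; apply fsum_le; intros i Hi; destruct (Hb i Hi).
  - lra.
  - rewrite <- pow_mult. lra.
Qed.

Lemma radial_gap : U - L <= INR a / INR N.
Proof.
  assert (HNp : 0 < INR N) by (apply lt_0_INR; lia). assert (1 <= INR a) by (apply (le_INR 1); auto).
  unfold U, L. rewrite <- fsum_sub.
  apply Rle_trans with (fsum (fun i => INR a / INR N * (t (S i) ^ (2 * m) - t i ^ (2 * m))) N).
  - apply fsum_le. intros i Hi. unfold t.
    pose proof (grid_range N i N_pos ltac:(lia)). pose proof (grid_range N (S i) N_pos ltac:(lia)).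
    pose proof (grid_step N i N_pos). pose proof (grid_pow_mono N i (2 * m) N_pos Hi).
    assert (0 < 1 / INR N) by (apply Rdiv_lt_0_compat; lra).
    rewrite <- pow_mult, <- Rmult_minus_distr_l.
    apply (Rmult_le_compat_r (grid N (S i) ^ (2 * m) - grid N i ^ (2 * m))); [lra|].
    eapply Rle_trans; [apply pow_sub_le; lra|]. right.
    match goal with H : grid N (S i) - grid N i = _ |- _ => rewrite H end. field. lra.
  - rewrite fsum_scal, (fsum_telescope (fun i => t i ^ (2 * m))).
    assert (Ht : t N = 1) by (unfold t, grid; field; lra). rewrite Ht, pow1.
    assert (0 <= t 0 ^ (2 * m)) by (apply pow_le; unfold t, grid; simpl; lra).
    assert (0 <= INR a / INR N) by (apply Rdiv_nonneg; lra). nra.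
Qed.

Lemma radial_rule_moment :
  Rabs (lsum (radial_rule a N) (fun pt => fst pt * snd pt ^ m) - INR a / (INR a + 2 * INR m))
  <= INR a / INR N.
Proof.
  rewrite lsum_radial_rule. cbn [fst snd]. fold t. fold U.
  rewrite <- radial_exact. pose proof radial_sandwich. pose proof radial_gap.
  rewrite Rabs_right by lra. lra.
Qed.

End RadialMoment.

(* Mixed moments s^al (1-s)^be are alternating sums of pure moments, each within a/N. *)
Lemma radial_rule_beta a N al be : (1 <= N)%nat -> (1 <= a)%nat ->
  Rabs (lsum (radial_rule a N) (fun pt => fst pt * snd pt ^ al * (1 - snd pt) ^ be) - beta_mom a al be)
  <= 2 ^ be * (INR a / INR N).
Proof.
  intros HN Ha. set (Tr := radial_rule a N). rewrite beta_mom_alternating by auto.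
  rewrite (lsum_ext _ _ (fun pt => fsum (fun j => binom be j * (-1) ^ j * (fst pt * snd pt ^ (al + j))) (S be))).
  2: { intros pt _. replace (1 - snd pt) with ((-1) * snd pt + 1) by ring. rewrite binomial_fsum, <- fsum_scal.
       apply fsum_ext; intros j _. rewrite pow1, Rpow_mult_distr, pow_add. ring. }
  rewrite (lsum_fsum Tr (fun pt j => binom be j * (-1) ^ j * (fst pt * snd pt ^ (al + j)))).
  rewrite (fsum_ext (fun i => lsum Tr (fun p => binom be i * (-1) ^ i * (fst p * snd p ^ (al + i))))
             (fun j => binom be j * (-1) ^ j * lsum Tr (fun pt => fst pt * snd pt ^ (al + j))))
    by (intros; apply lsum_scal).
  rewrite <- fsum_sub. eapply Rle_trans; [apply fsum_abs|].
  rewrite <- fsum_binom, Rmult_comm, <- fsum_scal. apply fsum_le. intros j _.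
  rewrite <- Rmult_minus_distr_l, !Rabs_mult, (Rabs_right (binom be j)) by (apply Rle_ge, binom_nonneg).
  rewrite pow_1_abs, Rmult_1_r, Rmult_comm. apply Rmult_le_compat_r; [apply binom_nonneg|].
  pose proof (radial_rule_moment a N (al + j) HN Ha). rewrite plus_INR in *. auto.
Qed.

(* Choose the inner errors eta/(3·4^K) and a grid fine enough for the radial rule. *)
Lemma cubature_step a : (1 <= a)%nat ->
  (forall K eta, 0 < eta -> exists mu, cubature a mu K eta) ->
  forall K eta, 0 < eta -> exists mu, cubature (a + 2) mu K eta.
Proof.
  intros Ha IH K eta He.
  set (e1 := eta / (3 * 4 ^ K)).
  assert (H4 : 0 < 4 ^ K) by (apply pow_lt; lra).
  assert (He1 : 0 < e1) by (unfold e1; apply Rdiv_lt_0_compat; lra).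
  assert (HA : 1 <= INR a) by (apply (le_INR 1); auto).
  destruct (IH K e1 He1) as [mu Hmu].
  destruct (INR_unbounded (2 ^ K * INR a / e1)) as [N HN].
  assert (Hq : 0 < 2 ^ K * INR a / e1)
    by (apply Rdiv_lt_0_compat; auto; apply Rmult_lt_0_compat; [apply pow_lt|]; lra).
  assert (HN1 : (1 <= N)%nat) by (destruct N; [simpl in HN; lra | lia]).
  assert (HNp : 0 < INR N) by (apply lt_0_INR; lia).
  exists (product_rule a mu (circle_rule (S K)) (radial_rule a N)).
  apply cubature_weaken with (4 ^ K * (e1 + e1 + 0)).
  { unfold e1. replace (4 ^ K * (eta / (3 * 4 ^ K) + eta / (3 * 4 ^ K) + 0)) with (2 * eta / 3)
      by (field; lra). lra. }
  apply cubature_product; auto.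
  - apply cubature_circle; lia.
  - intros p Hp; apply radial_rule_nonneg with a N; auto.
  - apply radial_rule_mass; auto.
  - intros p Hp; apply radial_rule_range with a N; auto.
  - intros al be Hab. eapply Rle_trans; [apply radial_rule_beta; auto|].
    apply Rle_trans with (2 ^ K * (INR a / INR N)).
    + apply Rmult_le_compat_r; [apply Rdiv_nonneg; lra | apply Rle_pow; [lra | lia]].
    + apply Rmult_le_reg_r with (INR N); auto.
      replace (2 ^ K * (INR a / INR N) * INR N) with (2 ^ K * INR a) by (field; lra).
      apply (Rmult_lt_compat_l e1) in HN; auto.
      replace (e1 * (2 ^ K * INR a / e1)) with (2 ^ K * INR a) in HN by (field; lra). lra.
Qed.

(* Induction on the dimension in steps of two, from S^0 and S^1. *)
Lemma cubature_exists d K eta : (1 <= d)%nat -> 0 < eta -> exists mu, cubature d mu K eta.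
Proof.
  intros Hd He.
  assert (Hpair : forall j, (forall K eta, 0 < eta -> exists mu, cubature (1 + j) mu K eta) /\
                            (forall K eta, 0 < eta -> exists mu, cubature (2 + j) mu K eta)).
  { induction j as [|j [H1 H2]].
    - split; intros K' eta' He'.
      + exists rule_S0; apply cubature_S0; lra.
      + exists (circle_rule (S K')). apply cubature_weaken with 0; [lra | apply cubature_circle; lia].
    - split.
      + replace (1 + S j)%nat with (2 + j)%nat by lia. auto.
      + replace (2 + S j)%nat with ((1 + j) + 2)%nat by lia. apply cubature_step; auto. lia. }
  replace d with (1 + (d - 1))%nat by lia. apply Hpair; auto.
Qed.

(* ** The series F_d and exponential moments of cubature rules *)

Lemma dfact_SS m : dfact (S (S m)) = (S (S m) * dfact m)%nat.
Proof. reflexivity. Qed.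

Lemma dfact_pos n : (0 < dfact n)%nat.
Proof.
  assert (H : forall m, (0 < dfact m /\ 0 < dfact (S m))%nat).
  { induction m as [|m [H0 H1]]; [simpl; lia | split; auto; rewrite dfact_SS; lia]. }
  apply H.
Qed.

Lemma dfact_even k : INR (dfact (2 * k)) = 2 ^ k * INR (fact k).
Proof.
  induction k as [|k IH]; [simpl; lra|]. replace (2 * S k)%nat with (S (S (2 * k))) by lia.
  rewrite dfact_SS, mult_INR, IH, INR_fact_S, !S_INR, mult_INR. simpl pow.
  replace (INR 2) with 2 by (simpl; lra). ring.
Qed.

Lemma dfact_shift e k : INR (dfact (e + 2 * k)) = INR (dfact e) * 2 ^ k * rising ((INR e + 2) / 2) k.
Proof.
  induction k as [|k IH]; [rewrite Nat.add_0_r; simpl; ring|].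
  replace (e + 2 * S k)%nat with (S (S (e + 2 * k))) by lia.
  rewrite dfact_SS, mult_INR, IH. simpl rising. simpl pow. rewrite !S_INR, plus_INR, mult_INR.
  replace (INR 2) with 2 by (simpl; lra). field.
Qed.

Lemma Fterm_sph_mom d z k : (2 <= d)%nat -> Fterm d z k = sph_mom d k / INR (fact (2 * k)) * z ^ (2 * k).
Proof.
  intros Hd. unfold Fterm, sph_mom. replace (d + 2 * k - 2)%nat with ((d - 2) + 2 * k)%nat by lia.
  rewrite dfact_shift, dfact_even.
  replace ((INR (d - 2) + 2) / 2) with (INR d / 2) by (rewrite minus_INR by lia; simpl; field).
  assert (0 < INR (dfact (d - 2))) by (apply lt_0_INR, dfact_pos).
  assert (1 <= INR d) by (apply (le_INR 1); lia).
  pose proof (rising_pos (INR d / 2) k ltac:(lra)). pose proof (INR_fact_lt_0 k).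
  pose proof (INR_fact_lt_0 (2 * k)).
  replace 4 with (2 * 2) by ring. rewrite Rpow_mult_distr. field.
  repeat split; try lra; apply pow_nonzero; lra.
Qed.

Lemma pow4_le_fact_double k : 4 ^ k <= 2 * INR (fact (2 * k)).
Proof.
  destruct k; [simpl; lra|]. induction k as [|k IH]; [simpl; lra|].
  replace (2 * S (S k))%nat with (S (S (2 * S k))) by lia. rewrite !INR_fact_S. simpl pow in *.
  rewrite !S_INR. pose proof (pos_INR (2 * S k)). rewrite mult_INR in *.
  replace (INR 2) with 2 in * by (simpl; lra). rewrite S_INR in *.
  pose proof (pos_INR k). pose proof (INR_fact_lt_0 (2 * S k)).
  assert (4 <= (2 * (INR k + 1) + 1 + 1) * (2 * (INR k + 1) + 1)) by nra. nra.
Qed.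

Lemma pow2_le_fact_double k : 2 ^ k <= INR (fact (2 * k)).
Proof.
  destruct k; [simpl; lra|]. pose proof (pow4_le_fact_double (S k)).
  replace 4 with (2 * 2) in H by ring. rewrite Rpow_mult_distr in H.
  assert (2 <= 2 ^ S k) by (simpl; pose proof (pow_R1_Rle 2 k ltac:(lra)); lra).
  pose proof (pow_lt 2 (S k) ltac:(lra)). nra.
Qed.

Lemma pow2_tail_le_fact_double K k : (K < k)%nat -> 2 ^ K * 2 ^ k <= INR (fact (2 * k)).
Proof.
  intros H. pose proof (pow4_le_fact_double k). replace 4 with (2 * 2) in H0 by ring.
  rewrite Rpow_mult_distr in H0. rewrite <- pow_add.
  assert (2 ^ (K + k) * 2 <= 2 ^ k * 2 ^ k).
  { rewrite <- pow_add. rewrite <- (pow_1 2) at 2. rewrite <- pow_add. apply Rle_pow; [lra | lia]. }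
  lra.
Qed.

Lemma geom_half_le n : fsum (fun k => / 2 ^ k) n <= 2.
Proof.
  assert (E : fsum (fun k => / 2 ^ k) n = 2 - 2 * / 2 ^ n).
  { induction n as [|n IH]; [simpl; field|]. rewrite fsum_S, IH. simpl pow. field. apply pow_nonzero; lra. }
  rewrite E. assert (0 < / 2 ^ n) by (apply Rinv_0_lt_compat, pow_lt; lra). lra.
Qed.

Lemma F_term_bounds d k q : (1 <= d)%nat -> 0 <= q <= 1 ->
  0 <= sph_mom d k / INR (fact (2 * k)) * q ^ k <= / 2 ^ k.
Proof.
  intros Hd Hq. pose proof (sph_mom_pos d k Hd). pose proof (sph_mom_le1 d k Hd).
  pose proof (INR_fact_lt_0 (2 * k)). pose proof (pow2_le_fact_double k).
  assert (q ^ k <= 1) by (apply pow_le_one; lra). assert (0 <= q ^ k) by (apply pow_le; lra).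
  assert (/ INR (fact (2 * k)) <= / 2 ^ k) by (apply Rinv_le_contravar; auto; apply pow_lt; lra).
  assert (0 < / INR (fact (2 * k))) by (apply Rinv_0_lt_compat; auto).
  unfold Rdiv. split; [apply Rmult_le_pos; [apply Rmult_le_pos|]; lra|].
  replace (/ 2 ^ k) with (1 * / 2 ^ k * 1) by ring. apply Rmult_le_compat; try lra.
  - apply Rmult_le_pos; lra.
  - apply Rmult_le_compat; lra.
Qed.

Lemma F_limit d z l : Un_cv (sum_f_R0 (Fterm d z)) l -> F d z = l.
Proof.
  intros H. unfold F.
  pose proof (epsilon_spec (inhabits 0) (fun l => infinite_sum (Fterm d z) l) (ex_intro _ l H)) as He.
  eapply UL_sequence; [exact He | exact H].
Qed.

Lemma F_partial_sums d z N : (2 <= d)%nat ->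
  sum_f_R0 (Fterm d z) N = fsum (fun k => sph_mom d k / INR (fact (2 * k)) * (z ^ 2) ^ k) (S N).
Proof.
  intros Hd. rewrite sum_f_R0_fsum. apply fsum_ext; intros. rewrite Fterm_sph_mom, pow_mult by auto. auto.
Qed.

Lemma F_series d z : (2 <= d)%nat -> 0 <= z ^ 2 <= 1 -> Un_cv (sum_f_R0 (Fterm d z)) (F d z).
Proof.
  intros Hd Hz. destruct (growing_cv (sum_f_R0 (Fterm d z))) as [l Hl].
  - intros N. simpl sum_f_R0. rewrite Fterm_sph_mom, pow_mult by auto.
    pose proof (F_term_bounds d (S N) (z ^ 2) ltac:(lia) Hz). lra.
  - exists 2. intros y [N ->]. rewrite F_partial_sums by auto. eapply Rle_trans; [|apply geom_half_le].
    apply fsum_le; intros i _. apply F_term_bounds; auto; lia.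
  - rewrite (F_limit d z l); auto.
Qed.

Lemma exp_moment_series d mu x :
  (forall k, moment d mu x (2 * k + 1) = 0) ->
  Un_cv (fun N => fsum (fun k => / INR (fact (2 * k)) * moment d mu x (2 * k)) (S N))
        (integ mu (fun a => exp (dot d a x))).
Proof.
  intros Hodd.
  assert (Hall : Un_cv (sum_f_R0 (fun j => / INR (fact j) * moment d mu x j)) (integ mu (fun a => exp (dot d a x)))).
  { unfold integ. eapply Un_cv_ext; cycle 1.
    { apply cv_lsum. intros p _. apply cv_scal, exp_series. }
    intros N. cbv beta. rewrite !sum_f_R0_fsum. unfold moment.
    rewrite (lsum_ext mu _ (fun p => fsum (fun j => fst p * (/ INR (fact j) * dot d (snd p) x ^ j)) (S N)))
      by (intros p _; rewrite sum_f_R0_fsum, <- fsum_scal; auto).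
    rewrite (lsum_fsum mu (fun p j => fst p * (/ INR (fact j) * dot d (snd p) x ^ j))).
    apply fsum_ext; intros j _. rewrite <- lsum_scal. apply lsum_ext; intros; ring. }
  intros e He. destruct (Hall e He) as [M HM]. exists M. intros N HN.
  specialize (HM (2 * N)%nat ltac:(lia)). rewrite sum_f_R0_fsum in HM.
  replace (S (2 * N)) with (2 * N + 1)%nat in HM by lia. rewrite fsum_even_odd in HM.
  rewrite (fsum_ext (fun a => / INR (fact (2 * a + 1)) * moment d mu x (2 * a + 1)) (fun _ => 0)) in HM
    by (intros; rewrite Hodd; ring).
  rewrite fsum_const, Rmult_0_r, Rplus_0_r in HM. replace (N + 1)%nat with (S N) in HM by lia. exact HM.
Qed.

Section CubatureExpMoment.
Variables (d K : nat) (mu : rule) (eta : R) (x : nat -> R).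
Hypothesis d_ge2 : (2 <= d)%nat.
Hypothesis eta_nonneg : 0 <= eta.
Hypothesis mu_cub : cubature d mu K eta.
Hypothesis x_ball : dot d x x <= 1.

(* Terms of degree ≤ 2K are controlled by the cubature error, higher terms by 1/(2k)!. *)
Lemma exp_moment_term_error k :
  Rabs (/ INR (fact (2 * k)) * moment d mu x (2 * k) - sph_mom d k / INR (fact (2 * k)) * dot d x x ^ k)
  <= (eta + 2 * / 2 ^ K) * / 2 ^ k.
Proof.
  destruct mu_cub as [Hw Hs Hu _ He]. set (q := dot d x x).
  assert (Hq : 0 <= q) by apply dot_nonneg.
  replace (/ INR (fact (2 * k)) * moment d mu x (2 * k) - sph_mom d k / INR (fact (2 * k)) * q ^ k)
    with (/ INR (fact (2 * k)) * (moment d mu x (2 * k) - sph_mom d k * q ^ k)) by (unfold Rdiv; ring).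
  pose proof (INR_fact_lt_0 (2 * k)).
  rewrite Rabs_mult, Rabs_right by (apply Rle_ge; left; apply Rinv_0_lt_compat; auto).
  assert (Hqk : q ^ k <= 1) by (apply pow_le_one; unfold q in *; lra).
  assert (0 <= q ^ k) by (apply pow_le; lra).
  assert (H2k : 0 < / 2 ^ k) by (apply Rinv_0_lt_compat, pow_lt; lra).
  assert (H2K : 0 < / 2 ^ K) by (apply Rinv_0_lt_compat, pow_lt; lra).
  destruct (Compare_dec.le_lt_dec k K) as [Hk|Hk].
  - pose proof (He x k Hk) as Hek. fold q in Hek.
    assert (/ INR (fact (2 * k)) <= / 2 ^ k)
      by (apply Rinv_le_contravar; [apply pow_lt; lra | apply pow2_le_fact_double]).
    apply Rle_trans with (/ 2 ^ k * (eta * 1)).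
    + apply Rmult_le_compat; [left; apply Rinv_0_lt_compat; auto | apply Rabs_pos | auto |].
      eapply Rle_trans; [apply Hek | apply Rmult_le_compat_l; lra].
    + assert (0 <= 2 * / 2 ^ K * / 2 ^ k) by (apply Rmult_le_pos; lra). nra.
  - pose proof (moment_even_bound d mu x k Hw Hs Hu) as Hsb. fold q in Hsb.
    pose proof (sph_mom_pos d k ltac:(lia)). pose proof (sph_mom_le1 d k ltac:(lia)).
    assert (Rabs (moment d mu x (2 * k) - sph_mom d k * q ^ k) <= 2).
    { assert (0 <= sph_mom d k * q ^ k <= 1)
        by (split; [apply Rmult_le_pos | rewrite <- (Rmult_1_l 1); apply Rmult_le_compat]; lra).
      eapply Rle_trans; [apply Rabs_triang|]. rewrite Rabs_Ropp, (Rabs_right (sph_mom d k * q ^ k)); lra. }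
    assert (/ INR (fact (2 * k)) <= / 2 ^ K * / 2 ^ k).
    { rewrite <- Rinv_mult. apply Rinv_le_contravar; [apply Rmult_lt_0_compat; apply pow_lt; lra|].
      apply pow2_tail_le_fact_double; auto. }
    apply Rle_trans with ((/ 2 ^ K * / 2 ^ k) * 2).
    + apply Rmult_le_compat; auto; [left; apply Rinv_0_lt_compat; auto | apply Rabs_pos].
    + assert (0 <= eta * / 2 ^ k) by (apply Rmult_le_pos; lra). nra.
Qed.

Lemma cubature_exp_error :
  Rabs (integ mu (fun a => exp (dot d a x)) - F d (norm d x)) <= 2 * (eta + 2 * / 2 ^ K).
Proof.
  assert (Hq : 0 <= norm d x ^ 2 <= 1).
  { unfold norm. rewrite pow2_sqrt by apply dot_nonneg. split; [apply dot_nonneg | auto]. }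
  assert (H2K : 0 < / 2 ^ K) by (apply Rinv_0_lt_compat, pow_lt; lra).
  apply (cv_dist_le _ _ _ _ _ (exp_moment_series d mu x (cub_odd _ _ _ _ mu_cub x))
           (Un_cv_ext _ _ (fun N => F_partial_sums d (norm d x) N d_ge2) _ (F_series d _ d_ge2 Hq))).
  intros N. unfold norm. rewrite pow2_sqrt by apply dot_nonneg.
  rewrite <- fsum_sub. eapply Rle_trans; [apply fsum_abs|].
  apply Rle_trans with (fsum (fun k => (eta + 2 * / 2 ^ K) * / 2 ^ k) (S N)).
  - apply fsum_le; intros k _. apply exp_moment_term_error.
  - rewrite fsum_scal, Rmult_comm. apply Rmult_le_compat_r; [lra | apply geom_half_le].
Qed.

End CubatureExpMoment.

Lemma INR_le_pow2 n : INR n <= 2 ^ n.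
Proof.
  induction n; [simpl; lra|]. rewrite S_INR. simpl.
  pose proof (pow_R1_Rle 2 n ltac:(lra)). lra.
Qed.

Lemma rule_approximating_F d dl : (2 <= d)%nat -> 0 < dl ->
  exists mu, (forall p, In p mu -> 0 <= fst p) /\ lsum mu fst = 1 /\
    (forall p, In p mu -> dot d (snd p) (snd p) = 1) /\
    forall x, dot d x x <= 1 -> Rabs (integ mu (fun a => exp (dot d a x)) - F d (norm d x)) <= dl.
Proof.
  intros Hd Hdl. destruct (INR_unbounded (8 / dl)) as [K HK].
  assert (HK2 : / 2 ^ K <= dl / 8).
  { pose proof (INR_le_pow2 K). assert (0 < 8 / dl) by (apply Rdiv_lt_0_compat; lra).
    replace (dl / 8) with (/ (8 / dl)) by (field; lra).
    apply Rinv_le_contravar; lra. }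
  destruct (cubature_exists d K (dl / 8) ltac:(lia) ltac:(lra)) as [mu Hmu].
  exists mu. pose proof Hmu as [Hw Hs Hu _ _]. repeat split; auto.
  intros x Hx. eapply Rle_trans; [apply (cubature_exp_error d K mu (dl / 8)); auto; lra | lra].
Qed.

Lemma dot_le1_of_norm d x : norm d x <= 1 -> dot d x x <= 1.
Proof.
  unfold norm. intros Hx. pose proof (dot_nonneg d x). pose proof (sqrt_pos (dot d x x)).
  rewrite <- (sqrt_sqrt (dot d x x)) by auto. nra.
Qed.

Lemma net_equal_weights d n ws x : length ws = n ->
  net d n (fun i => nth i ws (fun _ => 0)) (fun _ => 1 / INR n) x
  = 1 / INR n * lsum ws (fun w => exp (dot d w x)).
Proof.
  intros Hl. unfold net. rewrite rsum_fsum, <- Hl at 1.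
  rewrite (fsum_scal (1 / INR n) (fun i => exp (dot d (nth i ws (fun _ => 0)) x))).
  f_equal. apply (fsum_nth ws (fun w => exp (dot d w x))).
Qed.

(* With n ≥ 36/ε² atoms the sampling error sqrt(exp(‖x‖²)·n·e)/n ≤ 3/√n is at most ε/2. *)
Lemma sampling_error_le eps n q : 0 < eps -> 36 <= eps ^ 2 * INR n -> q <= 1 ->
  1 / INR n * sqrt (exp q * (INR n * exp 1)) <= eps / 2.
Proof.
  intros Heps Hne Hq. assert (Hn : 0 < INR n) by (pose proof (pos_INR n); nra).
  assert (Hexp : exp q <= 3).
  { pose proof exp_le_3. destruct (Rle_lt_or_eq_dec _ _ Hq) as [Hlt| ->]; [|lra].
    pose proof (exp_increasing _ _ Hlt). lra. }
  assert (Hs : sqrt (exp q * (INR n * exp 1)) <= eps * INR n / 2).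
  { rewrite <- (sqrt_pow2 (eps * INR n / 2)) by (apply Rdiv_nonneg; [apply Rmult_le_pos|]; lra).
    apply sqrt_le_1_alt. pose proof exp_le_3. pose proof (exp_pos q). pose proof (exp_pos 1).
    apply Rle_trans with (3 * (INR n * 3)).
    - apply Rmult_le_compat; try lra; [apply Rmult_le_pos; lra | apply Rmult_le_compat_l; lra].
    - replace ((eps * INR n / 2) ^ 2) with (eps ^ 2 * INR n * INR n / 4) by (simpl; field). nra. }
  apply Rle_trans with (1 / INR n * (eps * INR n / 2)).
  - apply Rmult_le_compat_l; auto. apply Rdiv_nonneg; lra.
  - right. field. lra.
Qed.

Theorem theorem6 :
  forall (eps : R) (d : nat), 0 < eps -> (2 <= d)%nat ->
  forall n : nat, INR n - 1 < 36 / eps ^ 2 <= INR n ->   (* n = ceil(36/eps^2) *)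
  exists (w : nat -> nat -> R) (v : nat -> R),
    (forall i, (i < n)%nat -> norm d (w i) = 1) /\
    (forall i, (i < n)%nat -> Rabs (v i) <= 1 / INR n) /\
    (forall x : nat -> R, norm d x <= 1 ->
       Rabs (net d n w v x - F d (norm d x)) <= eps).
Proof.
  intros eps d Heps Hd n [_ Hn].
  assert (He2 : 0 < eps ^ 2) by (apply pow_lt; auto).
  assert (Hne : 36 <= eps ^ 2 * INR n).
  { apply (Rmult_le_compat_l (eps ^ 2)) in Hn; [|lra].
    replace (eps ^ 2 * (36 / eps ^ 2)) with 36 in Hn by (field; lra). lra. }
  assert (Hn0 : 0 < INR n) by nra.
  destruct (rule_approximating_F d (eps / 2) Hd ltac:(lra)) as [mu [Hw [Hs [Hu Hmu]]]].
  destruct (maurey_sampling d mu Hw Hs Hu n) as [ws [Hl [Hin Hsamp]]].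
  exists (fun i => nth i ws (fun _ => 0)), (fun _ => 1 / INR n). split; [|split].
  - intros i Hi. assert (Hi' : (i < length ws)%nat) by lia.
    destruct (Hin _ (nth_In ws (fun _ => 0) Hi')) as [p [Hp ->]].
    unfold norm. rewrite Hu, sqrt_1 by auto. reflexivity.
  - intros i _. rewrite Rabs_right; [lra | apply Rle_ge, Rdiv_nonneg; lra].
  - intros x Hx. apply dot_le1_of_norm in Hx. rewrite net_equal_weights by auto.
    set (E := integ mu (fun a => exp (dot d a x))).
    replace (1 / INR n * lsum ws (fun w => exp (dot d w x)) - F d (norm d x)) with
      (1 / INR n * (lsum ws (fun w => exp (dot d w x)) - INR n * E) + (E - F d (norm d x)))
      by (field; lra).
    eapply Rle_trans; [apply Rabs_triang|]. specialize (Hmu x Hx). fold E in Hmu.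
    rewrite Rabs_mult, Rabs_right by (apply Rle_ge, Rdiv_nonneg; lra).
    assert (1 / INR n * Rabs (lsum ws (fun w => exp (dot d w x)) - INR n * E) <= eps / 2).
    { eapply Rle_trans; [|apply (sampling_error_le eps n (dot d x x)); auto].
      apply Rmult_le_compat_l; [apply Rdiv_nonneg; lra | apply Hsamp]. }
    lra.
Qed.
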